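(* For every integer $d\ge2$ there exists a simply connected domain $\Omega_+\subset\mathbb C$ with boundary $\Gamma^\perp=\partial\Omega_+$ such that: (i) $\Omega_+$ contains $\{x\in\mathbb R:x>-d^{-1}\}$; (ii) $\Gamma^\perp=\Gamma^\perp_{\rm up}\cup\Gamma^\perp_{\rm down}$, where $\Gamma^\perp_{\rm up}$ is a curve from the point $-d^{-1}$ to infinity lying in the upper half-plane except for its endpoint $-d^{-1}$, and $\Gamma^\perp_{\rm down}=\{\bar w:w\in\Gamma^\perp_{\rm up}\}$; (iii) the map $w\mapsto w(w+1)^{d-1}$ is a bijection from $\Omega_+$ onto $\mathbb C\setminus(-\infty,-(r^{\rm sf})^d]$, where $r^{\rm sf}=d^{-1/d}(1-d^{-1})^{1-1/d}$; (iv) the map $w\mapsto w(w+1)^{d-1}$ is a bijection from $\Gamma^\perp_{\rm up}$ onto $(-\infty,-(r^{\rm sf})^d]$; (v) if $w\in\Omega_+\cup\Gamma^\perp$ then $w+c\in\Omega_+$ for every constant $c>0$. *)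

From Stdlib Require Import Reals.
From Coquelicot Require Import Coquelicot.
Open Scope R_scope.

Definition connected_set (S : C -> Prop) : Prop :=
  forall U V : C -> Prop, open U -> open V ->
    (forall z, S z -> U z \/ V z) ->
    (forall z, S z -> U z -> V z -> False) ->
    (exists z, S z /\ U z) -> (exists z, S z /\ V z) -> False.

Definition domain (S : C -> Prop) : Prop :=
  open S /\ (exists z, S z) /\ connected_set S.

(* Continuous maps on [0,1] (resp. [0,1]^2) are represented by continuous
   maps on R (resp. R*R); every continuous map on [0,1] (resp. [0,1]^2)
   extends to one (by clamping), so nothing is lost. *)
Definition simply_connected (S : C -> Prop) : Prop :=
  forall g : R -> C,
    (forall t, continuous g t) ->
    (forall t, 0 <= t <= 1 -> S (g t)) ->
    g 0 = g 1 ->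
    exists H : R * R -> C,
      (forall p, continuous H p) /\
      (forall s t, 0 <= s <= 1 -> 0 <= t <= 1 -> S (H (s, t))) /\
      (forall t, 0 <= t <= 1 -> H (0, t) = g t) /\
      (forall t, 0 <= t <= 1 -> H (1, t) = H (1, 0)) /\
      (forall s, 0 <= s <= 1 -> H (s, 0) = H (s, 1)).

Definition simply_connected_domain (S : C -> Prop) : Prop :=
  domain S /\ simply_connected S.

Definition closure_C (S : C -> Prop) (z : C) : Prop :=
  forall eps : posreal, exists w, S w /\ ball z eps w.
Definition interior_C (S : C -> Prop) (z : C) : Prop :=
  exists eps : posreal, forall w, ball z eps w -> S w.
Definition boundary_C (S : C -> Prop) (z : C) : Prop :=
  closure_C S z /\ ~ interior_C S z.

(* A curve from the point a to infinity: the image of a continuous injective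
   map gamma : [0, +oo) -> C with gamma 0 = a and |gamma t| -> +oo as
   t -> +oo.  Continuity is required on all of R (harmless, by extension). *)
Definition curve_to_infinity (a : C) (gamma : R -> C) : Prop :=
  (forall t, continuous gamma t) /\
  gamma 0 = a /\
  (forall s t, 0 <= s -> 0 <= t -> gamma s = gamma t -> s = t) /\
  (forall M : R, exists T : R, forall t, T <= t -> M < Cmod (gamma t)).

Definition image_from0 (gamma : R -> C) (z : C) : Prop :=
  exists t, 0 <= t /\ z = gamma t.

Definition fd (d : nat) (w : C) : C := Cmult w (Cpow (Cplus w (RtoC 1)) (d - 1)).

Definition rsf (d : nat) : R :=
  Rpower (INR d) (- / INR d) * Rpower (1 - / INR d) (1 - / INR d).

Definition cut_ray (d : nat) (z : C) : Prop :=
  Im z = 0 /\ Re z <= - (rsf d) ^ d.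

Definition bij_onto (f : C -> C) (A B : C -> Prop) : Prop :=
  (forall w, A w -> B (f w)) /\
  (forall w1 w2, A w1 -> A w2 -> f w1 = f w2 -> w1 = w2) /\
  (forall z, B z -> exists w, A w /\ f w = z).

(* Write a point [w] of the upper half-plane through the angles [A = arg (w+1)]
   and [B = arg w - A] of the triangle [-1, 0, w].  By the law of sines
   [|w| = sin A / sin B], hence [fd d w = M(A, B) e^(i phi)] with
   [phi = arg w + (d-1) arg (w+1)] and [M = sin A / sin B * (sin (A+B) / sin B)^(d-1)].
   [Omega_plus] is the ray [(-1/d, +oo)] together with the points of the upper
   half-plane where [phi < PI] and their conjugates.  Along each level curve
   [phi = const] the logarithmic derivative of [M] with respect to [A] is a sum
   of squares over a positive denominator, so [M] increases strictly from [0]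
   to [+oo]: [fd d] maps the upper part of [Omega_plus] bijectively onto the
   upper half-plane, and the level curve [phi = PI], which is [Gamma_up], onto
   [(-oo, -(r^sf)^d]].  On the real axis [x (x+1)^(d-1)] increases from its
   critical value [-(r^sf)^d] at [x = -1/d].  Both angles decrease under
   [w |-> w + c] and under [w |-> l w] for [0 < l <= 1], so [Omega_plus] is
   invariant under right shifts and star-shaped about [0], hence connected and
   simply connected. *)

From Stdlib Require Import Reals Lra Lia Classical.
From Coquelicot Require Import Coquelicot.
Open Scope R_scope.

Lemma continuous_of_ex_derive (f : R -> R) x : ex_derive f x -> continuous f x.
Proof. exact (@ex_derive_continuous R_AbsRing R_NormedModule f x). Qed.

Lemma continuous_eps (f : R -> R) x : continuous f x -> forall eps, 0 < eps ->
  exists del, 0 < del /\ forall y, Rabs (y - x) < del -> Rabs (f y - f x) < eps.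
Proof.
  intros Hc eps He.
  destruct (proj1 (filterlim_locally f (f x)) Hc (mkposreal eps He)) as [del H].
  exists del. split; [apply cond_pos|]. intros y Hy. exact (H y Hy).
Qed.

Lemma increasing_left_end (f : R -> R) a b : continuous f a ->
  (forall x y, a < x -> x < y -> y < b -> f x < f y) ->
  forall x, a < x < b -> f a < f x.
Proof.
  intros Hc Hincr x Hx.
  set (m := (a + x) / 2).
  assert (Hm : f m < f x) by (apply Hincr; unfold m; lra).
  enough (f a <= f m) by lra.
  apply Rnot_lt_le. intro Hlt.
  destruct (continuous_eps f a Hc (f a - f m)) as [del [Hdel Hnear]]; [lra|].
  set (y := Rmin (a + del / 2) ((a + m) / 2)).
  assert (Hy : a < y <= (a + m) / 2).
  { split; [apply Rmin_glb_lt; unfold m; lra | apply Rmin_r]. }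
  assert (Hya : Rabs (y - a) < del).
  { assert (y <= a + del / 2) by apply Rmin_l. rewrite Rabs_right; lra. }
  assert (f y < f m) by (apply Hincr; unfold m in *; lra).
  specialize (Hnear y Hya). apply Rabs_def2 in Hnear. lra.
Qed.

Lemma IVT_left_closed (f : R -> R) a b y : a < b ->
  (forall x, a <= x <= b -> continuous f x) -> f a <= y -> y < f b ->
  exists x, a <= x < b /\ f x = y.
Proof.
  intros Hab Hc Ha Hb.
  destruct (Req_dec (f a) y) as [Ea|Na]; [exists a; split; [lra|exact Ea]|].
  destruct (Ranalysis5.IVT_interv (fun x => f x - y) a b) as [x [Hx Ex]]; try lra.
  - intros x Hx. apply continuity_pt_minus.
    + apply continuity_pt_filterlim, Hc, Hx.
    + apply continuity_pt_const. intros ? ?; reflexivity.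
  - exists x. split; [|lra]. split; [lra|].
    destruct (Req_dec x b) as [->|]; lra.
Qed.

Lemma inv_gt_near_root (q : R -> R) b : continuous q b -> q b = 0 ->
  forall M, exists del, 0 < del /\ forall x, Rabs (x - b) < del -> 0 < q x -> M < / q x.
Proof.
  intros Hc Hb M.
  set (M' := Rabs M + 1).
  assert (HM' : 0 < M') by (unfold M'; pose proof (Rabs_pos M); lra).
  destruct (continuous_eps q b Hc (/ M')) as [del [Hdel Hnear]];
    [apply Rinv_0_lt_compat, HM'|].
  exists del. split; [exact Hdel|]. intros x Hx Hq.
  specialize (Hnear x Hx). rewrite Hb, Rminus_0_r, Rabs_right in Hnear by lra.
  assert (M' < / q x).
  { rewrite <- (Rinv_inv M'). apply Rinv_lt_contravar; [|exact Hnear].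
    apply Rmult_lt_0_compat; [exact Hq | apply Rinv_0_lt_compat, HM']. }
  pose proof (Rle_abs M). unfold M' in *. lra.
Qed.

Lemma IVT_to_pole (f q : R -> R) a b y : a < b ->
  (forall x, a <= x < b -> continuous f x) ->
  (forall x, a < x < b -> 0 < q x /\ f x = / q x) ->
  continuous q b -> q b = 0 -> f a <= y ->
  exists x, a <= x < b /\ f x = y.
Proof.
  intros Hab Hf Hfq Hq Hqb Hy.
  destruct (inv_gt_near_root q b Hq Hqb y) as [del [Hdel Hnear]].
  set (c := Rmax (b - del / 2) ((a + b) / 2)).
  assert (Hc : (a + b) / 2 <= c < b /\ b - del / 2 <= c).
  { split; [split; [apply Rmax_r | apply Rmax_lub_lt; lra] | apply Rmax_l]. }
  assert (Hyc : y < f c).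
  { destruct (Hfq c ltac:(lra)) as [Hqc ->]. apply Hnear; [|exact Hqc].
    rewrite Rabs_left; lra. }
  destruct (IVT_left_closed f a c y) as [x [Hx Hfx]];
    [lra | intros; apply Hf; lra | exact Hy | exact Hyc |].
  exists x. split; [lra | exact Hfx].
Qed.

Lemma nonneg_of_nonneg_derive (g g' : R -> R) b : 0 <= b -> g 0 = 0 ->
  (forall x, is_derive g x (g' x)) -> (forall x, 0 <= x -> 0 <= g' x) -> 0 <= g b.
Proof.
  intros Hb H0 Hd Hpos.
  destruct (MVT_gen g 0 b g') as [c [Hc E]].
  - intros x _. apply Hd.
  - intros x _. apply continuity_pt_filterlim, continuous_of_ex_derive. eexists; apply Hd.
  - rewrite Rmin_left, Rmax_right in Hc by lra. rewrite H0 in E.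
    assert (0 <= g' c * (b - 0)) by (apply Rmult_le_pos; [apply Hpos|]; lra). lra.
Qed.

Lemma atan_le_id u : 0 <= u -> atan u <= u.
Proof.
  intro Hu.
  enough (0 <= u - atan u) by lra.
  apply (nonneg_of_nonneg_derive (fun u => u - atan u) (fun x => 1 - / (1 + x ^ 2))); auto.
  - rewrite atan_0. ring.
  - intro x. auto_derive; [auto|]. replace (x * (x * 1)) with (x ^ 2) by ring. ring.
  - intros x _. assert (0 <= x ^ 2) by apply pow2_ge_0.
    assert (/ (1 + x ^ 2) <= 1) by (rewrite <- Rinv_1; apply Rinv_le_contravar; lra). lra.
Qed.

Lemma atan_mul_le K a : 1 <= K -> 0 <= a -> atan (K * a) <= K * atan a.
Proof.
  intros HK Ha.
  enough (0 <= K * atan a - atan (K * a)) by lra.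
  apply (nonneg_of_nonneg_derive (fun a => K * atan a - atan (K * a))
           (fun x => K * / (1 + x ^ 2) - K * / (1 + (K * x) ^ 2))); auto.
  - rewrite Rmult_0_r, atan_0. ring.
  - intro x. auto_derive; [auto|]. replace (x * (x * 1)) with (x ^ 2) by ring.
    replace (K * x * (K * x * 1)) with ((K * x) ^ 2) by ring. ring.
  - intros x _. assert (0 <= x ^ 2) by apply pow2_ge_0.
    assert (0 <= (K ^ 2 - 1) * x ^ 2) by (apply Rmult_le_pos; nra).
    assert (1 + x ^ 2 <= 1 + (K * x) ^ 2) by (rewrite Rpow_mult_distr; nra).
    assert (/ (1 + (K * x) ^ 2) <= / (1 + x ^ 2)) by (apply Rinv_le_contravar; lra).
    nra.
Qed.

Lemma continuous_pair {U : UniformSpace} (f g : U -> R) x :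
  continuous f x -> continuous g x -> continuous (fun y => ((f y, g y) : C)) x.
Proof.
  intros Hf Hg. apply filterlim_locally. intro eps.
  apply (filter_imp (fun y => ball (f x) eps (f y) /\ ball (g x) eps (g y))).
  - intros y [Hy1 Hy2]. split; assumption.
  - apply filter_and; apply (proj1 (filterlim_locally _ _)); assumption.
Qed.

Lemma continuous_Re (w : C) : continuous (fun u : C => Re u) w.
Proof. apply continuous_fst. Qed.

Lemma continuous_Im (w : C) : continuous (fun u : C => Im u) w.
Proof. apply continuous_snd. Qed.

Lemma continuous_Cconj (w : C) : continuous Cconj w.
Proof.
  apply continuous_pair; [apply continuous_Re|].
  apply (continuous_opp (fun u : C => Im u)), continuous_Im.
Qed.

Lemma continuous_Cmod (w : C) : continuous Cmod w.
Proof.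
  apply (continuous_ext
    (@norm R_AbsRing (prod_NormedModule R_AbsRing R_NormedModule R_NormedModule)));
    [intro; symmetry; apply Cmod_norm|].
  apply filterlim_norm.
Qed.

Lemma ball_C (z w : C) e : ball z e w <-> Rabs (Re w - Re z) < e /\ Rabs (Im w - Im z) < e.
Proof. destruct z, w. reflexivity. Qed.

Lemma open_and_pos {T : UniformSpace} (D : T -> Prop) (F : T -> R) : open D ->
  (forall x, D x -> continuous F x) -> open (fun x => D x /\ 0 < F x).
Proof.
  intros HD HF x [Dx Fx]. apply filter_and; [exact (HD x Dx)|].
  apply (HF x Dx (fun u => 0 < u)). exact (open_gt 0 (F x) Fx).
Qed.

Lemma open_pos {T : UniformSpace} (F : T -> R) :
  (forall x, continuous F x) -> open (fun x => 0 < F x).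
Proof.
  intro HF. apply (open_ext (fun x => True /\ 0 < F x)); [tauto|].
  apply open_and_pos; [apply open_true | auto].
Qed.

Lemma closure_open_disjoint (S U : C -> Prop) z : closure_C S z -> open U -> U z ->
  (forall w, U w -> ~ S w) -> False.
Proof.
  intros Hcl HU Uz Hdisj. destruct (HU z Uz) as [eps Heps].
  destruct (Hcl eps) as [w [Sw Hw]]. exact (Hdisj w (Heps w Hw) Sw).
Qed.

Lemma path_not_separated (S U V : C -> Prop) (p : R -> C) : open U -> open V ->
  (forall t, continuous p t) -> (forall t, 0 <= t <= 1 -> S (p t)) ->
  (forall z, S z -> U z \/ V z) -> (forall z, S z -> U z -> V z -> False) ->
  U (p 0) -> V (p 1) -> False.
Proof.
  intros HU HV Hc HS Hcov Hdis U0 V1.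
  (* [m] is the supremum of the times up to which [p] stays in [U]; by
     openness [p m] can lie neither in [U] nor in [V]. *)
  set (E := fun s => 0 <= s <= 1 /\ forall r, 0 <= r <= s -> U (p r)).
  assert (E0 : E 0) by (split; [lra | intros r Hr; replace r with 0 by lra; exact U0]).
  assert (Eb : bound E) by (exists 1; intros x [Hx _]; lra).
  destruct (completeness E Eb (ex_intro _ 0 E0)) as [m [Hub Hlub]].
  assert (Hm0 : 0 <= m) by (apply Hub; exact E0).
  assert (Hm1 : m <= 1) by (apply Hlub; intros x [Hx _]; lra).
  assert (Below : forall r, 0 <= r < m -> U (p r)).
  { intros r Hr. apply NNPP. intro Hn.
    assert (Hr_ub : is_upper_bound E r).
    { intros e [He1 He2]. apply Rnot_lt_le. intro Hlt. apply Hn, He2. lra. }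
    specialize (Hlub r Hr_ub). lra. }
  destruct (Hcov (p m) (HS m ltac:(lra))) as [Um|Vm].
  - destruct (Hc m (fun z => U z) (HU _ Um)) as [del Hdel].
    destruct (Req_dec m 1) as [->|Hm1'].
    { exact (Hdis (p 1) (HS 1 ltac:(lra)) Um V1). }
    set (s := Rmin 1 (m + del / 2)).
    assert (Hs : m < s <= m + del / 2).
    { split; [apply Rmin_glb_lt; pose proof (cond_pos del); lra | apply Rmin_r]. }
    assert (Es : E s).
    { split; [split; [lra | apply Rmin_l]|].
      intros r Hr. destruct (Rlt_or_le r m); [apply Below; lra|].
      apply Hdel. change (Rabs (r - m) < del). rewrite Rabs_right; lra. }
    specialize (Hub s Es). lra.
  - destruct (Hc m (fun z => V z) (HV _ Vm)) as [del Hdel].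
    destruct (Req_dec m 0) as [->|Hm0'].
    { exact (Hdis (p 0) (HS 0 ltac:(lra)) U0 Vm). }
    set (r := Rmax 0 (m - del / 2)).
    assert (Hr : 0 <= r < m /\ m - del / 2 <= r).
    { pose proof (cond_pos del).
      split; [split; [apply Rmax_l | apply Rmax_lub_lt; lra] | apply Rmax_r]. }
    assert (Vr : V (p r)).
    { apply Hdel. change (Rabs (r - m) < del). rewrite Rabs_left; pose proof (cond_pos del); lra. }
    exact (Hdis (p r) (HS r ltac:(lra)) (Below r ltac:(lra)) Vr).
Qed.

Definition star_shaped (S : C -> Prop) : Prop :=
  S (RtoC 0) /\ forall z l, S z -> 0 <= l <= 1 -> S (Cmult (RtoC l) z).

Lemma RtoC_mult_pair (l : R) (z : C) : Cmult (RtoC l) z = (l * fst z, l * snd z).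
Proof. destruct z. unfold Cmult, RtoC; simpl. f_equal; ring. Qed.

Lemma continuous_contraction (g : R -> C) (p : R * R) : continuous g (snd p) ->
  continuous (fun q : R * R => Cmult (RtoC (1 - fst q)) (g (snd q))) p.
Proof.
  intro Hg.
  apply (continuous_ext (fun q : R * R =>
    (((1 - fst q) * fst (g (snd q)), (1 - fst q) * snd (g (snd q))) : C))).
  { intro q. symmetry. apply RtoC_mult_pair. }
  assert (H1 : continuous (fun q : R * R => 1 - fst q) p).
  { apply (continuous_comp (fun q : R * R => fst q) (fun x => 1 - x)).
    - apply continuous_fst.
    - apply continuous_of_ex_derive. auto_derive. auto. }
  apply continuous_pair.
  - apply (continuous_mult (fun q : R * R => 1 - fst q) (fun q => fst (g (snd q)))); [exact H1|].
    apply (continuous_comp (fun q : R * R => snd q) (fun t => fst (g t))); [apply continuous_snd|].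
    apply (continuous_comp g (fun c : C => fst c)); [exact Hg | apply continuous_Re].
  - apply (continuous_mult (fun q : R * R => 1 - fst q) (fun q => snd (g (snd q)))); [exact H1|].
    apply (continuous_comp (fun q : R * R => snd q) (fun t => snd (g t))); [apply continuous_snd|].
    apply (continuous_comp g (fun c : C => snd c)); [exact Hg | apply continuous_Im].
Qed.

Lemma star_shaped_connected S : star_shaped S -> connected_set S.
Proof.
  intros [S0 Sstar] U V HU HV Hcov Hdis [z1 [Sz1 Uz1]] [z2 [Sz2 Vz2]].
  assert (Hcont : forall z t, continuous (fun s => Cmult (RtoC (1 - s)) z) t).
  { intros z t.
    apply (continuous_ext (fun s => (((1 - s) * fst z, (1 - s) * snd z) : C)));
      [intro; symmetry; apply RtoC_mult_pair|].
    apply continuous_pair; apply continuous_of_ex_derive; auto_derive; auto. }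
  assert (Hend : forall z, Cmult (RtoC (1 - 0)) z = z /\ Cmult (RtoC (1 - 1)) z = RtoC 0).
  { intro z. rewrite !RtoC_mult_pair. destruct z; unfold RtoC; simpl; split; f_equal; ring. }
  assert (Hin : forall z, S z -> forall t, 0 <= t <= 1 -> S (Cmult (RtoC (1 - t)) z)).
  { intros z Sz t Ht. apply Sstar; [exact Sz | lra]. }
  destruct (Hcov (RtoC 0) S0) as [U0|V0].
  - apply (path_not_separated S V U (fun s => Cmult (RtoC (1 - s)) z2) HV HU (Hcont z2)
             (Hin z2 Sz2)).
    + intros z Sz. destruct (Hcov z Sz); [right | left]; assumption.
    + intros z Sz Vz Uz. exact (Hdis z Sz Uz Vz).
    + now rewrite (proj1 (Hend z2)).
    + now rewrite (proj2 (Hend z2)).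
  - apply (path_not_separated S U V (fun s => Cmult (RtoC (1 - s)) z1) HU HV (Hcont z1) (Hin z1 Sz1)
             Hcov Hdis).
    + now rewrite (proj1 (Hend z1)).
    + now rewrite (proj2 (Hend z1)).
Qed.

Lemma star_shaped_simply_connected S : star_shaped S -> simply_connected S.
Proof.
  intros [S0 Sstar] g Hg HgS Hg01.
  exists (fun q : R * R => Cmult (RtoC (1 - fst q)) (g (snd q))).
  split; [|split; [|split; [|split]]]; cbn [fst snd].
  - intro q. apply continuous_contraction, Hg.
  - intros s t Hs Ht. apply Sstar; [apply HgS, Ht | lra].
  - intros t _. rewrite Rminus_0_r. apply Cmult_1_l.
  - intros t _. rewrite !RtoC_mult_pair. f_equal; ring.
  - intros s _. now rewrite Hg01.
Qed.

Definition polar (r t : R) : C := (r * cos t, r * sin t).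

(* The argument of [w] in (0, PI) when [Im w > 0]; at [Im w = 0] the division
   by zero makes it [PI/2]. *)
Definition arg_up (w : C) : R := PI / 2 - atan (Re w / Im w).

Definition Csucc (w : C) : C := Cplus w (RtoC 1).

Lemma polar_mult r1 t1 r2 t2 :
  Cmult (polar r1 t1) (polar r2 t2) = polar (r1 * r2) (t1 + t2).
Proof. unfold polar, Cmult; simpl. rewrite cos_plus, sin_plus. f_equal; ring. Qed.

Lemma polar_pow r t n : Cpow (polar r t) n = polar (r ^ n) (INR n * t).
Proof.
  induction n as [|n IH].
  - simpl. unfold polar, RtoC. rewrite Rmult_0_l, cos_0, sin_0. f_equal; ring.
  - change (Cpow (polar r t) (S n)) with (Cmult (polar r t) (Cpow (polar r t) n)).
    rewrite IH, polar_mult, S_INR. f_equal; simpl; ring.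
Qed.

Lemma Cmod_polar r t : 0 <= r -> Cmod (polar r t) = r.
Proof.
  intro Hr. unfold Cmod, polar; cbn [fst snd].
  replace ((r * cos t) ^ 2 + (r * sin t) ^ 2) with (r ^ 2 * (sin t ^ 2 + cos t ^ 2)) by ring.
  rewrite <- !Rsqr_pow2, sin2_cos2, Rmult_1_r, Rsqr_pow2. apply sqrt_pow2, Hr.
Qed.

Lemma Im_Csucc w : Im (Csucc w) = Im w.
Proof. unfold Csucc, Cplus, RtoC, Im; cbn [fst snd]. ring. Qed.

Lemma Re_Csucc w : Re (Csucc w) = Re w + 1.
Proof. reflexivity. Qed.

Lemma Im_shift w c : Im (Cplus w (RtoC c)) = Im w.
Proof. unfold Cplus, RtoC, Im; cbn [fst snd]. ring. Qed.

Lemma Re_shift w c : Re (Cplus w (RtoC c)) = Re w + c.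
Proof. reflexivity. Qed.

Lemma Cconj_shift w c : Cconj (Cplus w (RtoC c)) = Cplus (Cconj w) (RtoC c).
Proof. unfold Cconj, Cplus, RtoC; cbn [fst snd]. f_equal; ring. Qed.

Lemma Cmod_pos_Im w : 0 < Im w -> 0 < Cmod w.
Proof. intro H. apply Cmod_gt_0. intros ->. unfold Im in H; simpl in H. lra. Qed.

Lemma RtoC_Re w : Im w = 0 -> w = RtoC (Re w).
Proof. destruct w as [x y]. unfold RtoC, Re, Im; cbn [fst snd]. intros ->. reflexivity. Qed.

Lemma arg_up_range w : 0 < arg_up w < PI.
Proof. unfold arg_up. pose proof (atan_bound (Re w / Im w)). lra. Qed.

Lemma sqrt_1_plus_sqr_div x y : 0 < y -> sqrt (1 + (x / y)²) * y = sqrt (x ^ 2 + y ^ 2).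
Proof.
  intro Hy. rewrite <- (sqrt_pow2 y) at 2 by lra.
  rewrite <- sqrt_mult_alt; [| pose proof (Rle_0_sqr (x / y)); lra].
  f_equal. unfold Rsqr. field. lra.
Qed.

Lemma Cmod_cos_arg_up w : 0 < Im w -> Cmod w * cos (arg_up w) = Re w.
Proof.
  intro Hy. unfold arg_up. rewrite cos_shift, sin_atan.
  destruct w as [x y]. unfold Cmod, Re, Im in *; cbn [fst snd] in *.
  rewrite <- (sqrt_1_plus_sqr_div x y Hy).
  assert (0 < sqrt (1 + (x / y)²)) by (apply sqrt_lt_R0; pose proof (Rle_0_sqr (x / y)); lra).
  field. split; lra.
Qed.

Lemma Cmod_sin_arg_up w : 0 < Im w -> Cmod w * sin (arg_up w) = Im w.
Proof.
  intro Hy. unfold arg_up. rewrite sin_shift, cos_atan.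
  destruct w as [x y]. unfold Cmod, Re, Im in *; cbn [fst snd] in *.
  rewrite <- (sqrt_1_plus_sqr_div x y Hy).
  assert (0 < sqrt (1 + (x / y)²)) by (apply sqrt_lt_R0; pose proof (Rle_0_sqr (x / y)); lra).
  field. lra.
Qed.

Lemma polar_arg_up w : 0 < Im w -> w = polar (Cmod w) (arg_up w).
Proof.
  intro Hy. unfold polar. rewrite Cmod_cos_arg_up, Cmod_sin_arg_up by exact Hy.
  destruct w; reflexivity.
Qed.

Lemma arg_up_polar r t : 0 < r -> 0 < t < PI -> arg_up (polar r t) = t.
Proof.
  intros Hr Ht. unfold arg_up, polar, Re, Im; simpl.
  assert (0 < sin t) by (apply sin_gt_0; lra).
  replace (r * cos t / (r * sin t)) with (tan (PI / 2 - t)).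
  - rewrite atan_tan by lra. ring.
  - unfold tan. rewrite sin_shift, cos_shift. field. lra.
Qed.

Lemma arg_up_shift_lt w c : 0 < Im w -> 0 < c -> arg_up (Cplus w (RtoC c)) < arg_up w.
Proof.
  intros Hy Hc. unfold arg_up. destruct w as [x y]; unfold Re, Im in *; simpl in *.
  rewrite Rplus_0_r.
  assert (Hlt : x / y < (x + c) / y).
  { unfold Rdiv. apply Rmult_lt_compat_r; [apply Rinv_0_lt_compat|]; lra. }
  pose proof (atan_increasing _ _ Hlt). lra.
Qed.

Lemma continuous_arg_up_shift (c : R) (w : C) : Im w <> 0 ->
  continuous (fun u => arg_up (Cplus u (RtoC c))) w.
Proof.
  intro Hy. unfold arg_up, Cplus, RtoC, Re, Im; cbn [fst snd].
  apply (continuous_minus (fun _ : C => PI / 2) (fun u : C => atan ((fst u + c) / (snd u + 0))));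
    [apply continuous_const|].
  apply (continuous_comp (fun u : C => (fst u + c) / (snd u + 0)) atan);
    [|apply continuous_of_ex_derive; auto_derive; exact I].
  apply (continuous_mult (fun u : C => fst u + c) (fun u : C => / (snd u + 0))).
  - apply (continuous_plus (fun u : C => fst u) (fun _ : C => c));
      [apply continuous_Re | apply continuous_const].
  - apply (continuous_comp (fun u : C => snd u + 0) (fun x => / x)).
    + apply (continuous_plus (fun u : C => snd u) (fun _ : C => 0));
        [apply continuous_Im | apply continuous_const].
    + apply continuous_Rinv. unfold Im in Hy. lra.
Qed.

Lemma arg_up_scale w l : 0 < l -> arg_up (Cmult (RtoC l) w) = arg_up w.
Proof.
  intro Hl. unfold arg_up. rewrite RtoC_mult_pair. destruct w as [x y]; unfold Re, Im; simpl.
  destruct (Req_dec y 0) as [->|Hy].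
  - rewrite Rmult_0_r, !Rdiv_0_r. reflexivity.
  - do 2 f_equal. field. split; lra.
Qed.

Lemma arg_up_pos_Re w : 0 < Im w -> 0 < Re w -> arg_up w = atan (Im w / Re w).
Proof.
  intros Hy Hx. unfold arg_up.
  replace (Im w / Re w) with (/ (Re w / Im w)) by (field; lra).
  rewrite atan_inv by (apply Rdiv_lt_0_compat; lra). ring.
Qed.

Lemma arg_up_neg_Re w : 0 < Im w -> Re w < 0 -> PI - arg_up w = atan (Im w / - Re w).
Proof.
  intros Hy Hx. unfold arg_up.
  replace (Im w / - Re w) with (/ (- Re w / Im w)) by (field; lra).
  rewrite atan_inv by (apply Rdiv_lt_0_compat; lra).
  replace (- Re w / Im w) with (- (Re w / Im w)) by (field; lra).
  rewrite atan_opp. lra.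
Qed.

Lemma arg_up_ge_half w : 0 < Im w -> Re w <= 0 -> PI / 2 <= arg_up w.
Proof.
  intros Hy Hx. unfold arg_up.
  assert (Re w / Im w <= 0).
  { unfold Rdiv. assert (0 < / Im w) by (apply Rinv_0_lt_compat; lra). nra. }
  enough (atan (Re w / Im w) <= 0) by lra.
  rewrite <- atan_0. destruct H as [H|H]; [left; apply atan_increasing, H | rewrite H; lra].
Qed.

(* By the law of sines in the triangle [-1, 0, w], a point [w] of the upper
   half-plane with [arg (w+1) = A] and [arg w = A + B] is [sine_point A B]. *)
Definition sine_point (A B : R) : C := polar (sin A / sin B) (A + B).

Lemma Csucc_sine_point A B : sin B <> 0 -> Csucc (sine_point A B) = polar (sin (A + B) / sin B) A.
Proof.
  intro HB. unfold Csucc, sine_point, polar, Cplus, RtoC; cbn [fst snd].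
  assert (Hb : sin B = sin (A + B) * cos A - cos (A + B) * sin A).
  { rewrite <- sin_minus. f_equal. ring. }
  f_equal; [|field; exact HB].
  replace (sin A / sin B * cos (A + B) + 1) with ((sin A * cos (A + B) + sin B) / sin B)
    by (field; exact HB).
  rewrite Hb at 1. field. exact HB.
Qed.

Lemma sine_point_angles A B : 0 < A -> 0 < B -> A + B < PI ->
  0 < Im (sine_point A B) /\ arg_up (sine_point A B) = A + B /\
  arg_up (Csucc (sine_point A B)) = A.
Proof.
  intros HA HB HAB.
  assert (sA : 0 < sin A) by (apply sin_gt_0; lra).
  assert (sB : 0 < sin B) by (apply sin_gt_0; lra).
  assert (sAB : 0 < sin (A + B)) by (apply sin_gt_0; lra).
  split; [|split].
  - apply Rmult_lt_0_compat; [apply Rdiv_lt_0_compat|]; assumption.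
  - apply arg_up_polar; [apply Rdiv_lt_0_compat|]; lra.
  - rewrite Csucc_sine_point by lra. apply arg_up_polar; [apply Rdiv_lt_0_compat|]; lra.
Qed.

Lemma sine_point_of_arg w : 0 < Im w ->
  let A := arg_up (Csucc w) in let B := arg_up w - arg_up (Csucc w) in
  0 < A /\ 0 < B /\ A + B < PI /\ w = sine_point A B.
Proof.
  intros Hy A B.
  assert (Hy1 : 0 < Im (Csucc w)) by (rewrite Im_Csucc; exact Hy).
  pose proof (arg_up_range w). pose proof (arg_up_range (Csucc w)).
  assert (arg_up (Csucc w) < arg_up w) by (apply arg_up_shift_lt; lra).
  split; [unfold A; lra|]. split; [unfold B; lra|]. split; [unfold A, B; lra|].
  unfold sine_point. replace (A + B) with (arg_up w) by (unfold A, B; ring).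
  rewrite (polar_arg_up w Hy) at 1. f_equal.
  pose proof (Cmod_cos_arg_up w Hy) as c0. pose proof (Cmod_sin_arg_up w Hy) as s0.
  pose proof (Cmod_cos_arg_up (Csucc w) Hy1) as c1.
  pose proof (Cmod_sin_arg_up (Csucc w) Hy1) as s1.
  rewrite Re_Csucc in c1. rewrite Im_Csucc in s1. fold A in c1, s1.
  pose proof (Cmod_pos_Im w Hy). pose proof (Cmod_pos_Im (Csucc w) Hy1).
  assert (E : Cmod w * sin B * Cmod (Csucc w) = sin A * Cmod (Csucc w)).
  { unfold B. fold A. rewrite sin_minus.
    transitivity ((Cmod w * sin (arg_up w)) * (Cmod (Csucc w) * cos A)
      - (Cmod w * cos (arg_up w)) * (Cmod (Csucc w) * sin A)); [ring|].
    rewrite s0, c0, c1, s1, (Rmult_comm (sin A)), s1. ring. }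
  assert (sB : 0 < sin B) by (apply sin_gt_0; unfold B, A in *; lra).
  apply Rmult_eq_reg_r in E; [|lra].
  field_simplify_eq; [|lra]. rewrite <- E. ring.
Qed.

(* [cheb n A = sin (n A) / sin A], written without the division so that it
   is smooth at [A = 0]. *)
Fixpoint cheb (n : nat) (A : R) : R :=
  match n with 0%nat => 0 | S m => cheb m A * cos A + cos (INR m * A) end.

Lemma sin_mul_cheb n A : sin (INR n * A) = cheb n A * sin A.
Proof.
  induction n as [|n IH]; simpl cheb.
  - rewrite Rmult_0_l, sin_0. ring.
  - rewrite S_INR, Rmult_plus_distr_r, Rmult_1_l, sin_plus, IH. ring.
Qed.

Lemma cheb_0 n : cheb n 0 = INR n.
Proof.
  induction n as [|n IH]; simpl cheb; [reflexivity|].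
  rewrite IH, Rmult_0_r, cos_0, S_INR. ring.
Qed.

Lemma ex_derive_cheb n A : ex_derive (cheb n) A.
Proof.
  induction n as [|n IH]; simpl cheb.
  - apply ex_derive_const.
  - apply (ex_derive_plus (fun A => cheb n A * cos A) (fun A => cos (INR n * A))).
    + apply (ex_derive_mult (cheb n) cos); [exact IH|]. auto_derive. auto.
    + auto_derive. auto.
Qed.

Lemma continuous_cheb n A : continuous (cheb n) A.
Proof. apply continuous_of_ex_derive, ex_derive_cheb. Qed.

Lemma cheb_pos n A : (1 <= n)%nat -> 0 <= A -> INR n * A < PI -> 0 < cheb n A.
Proof.
  intros Hn HA HnA.
  assert (Hn' : 1 <= INR n) by apply (le_INR 1), Hn.
  destruct (Req_dec A 0) as [->|HA0]; [rewrite cheb_0; lra|].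
  assert (s1 : 0 < sin A) by (apply sin_gt_0; nra).
  assert (s2 : 0 < sin (INR n * A)) by (apply sin_gt_0; nra).
  rewrite sin_mul_cheb in s2. apply (Rmult_lt_reg_r (sin A)); lra.
Qed.

Lemma cheb_root n : (2 <= n)%nat -> cheb n (PI / INR n) = 0.
Proof.
  intro Hn. assert (Hn' : 2 <= INR n) by apply (le_INR 2), Hn. pose proof PI_RGT_0.
  assert (E : INR n * (PI / INR n) = PI) by (field; lra).
  assert (0 < sin (PI / INR n))
    by (apply sin_gt_0; [apply Rdiv_lt_0_compat | apply Rlt_div_l]; nra).
  pose proof (sin_mul_cheb n (PI / INR n)) as Hs. rewrite E, sin_PI in Hs.
  symmetry in Hs. apply Rmult_integral in Hs. destruct Hs; lra.
Qed.

(** * Level curves of the argument of [fd] *)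

(* The derivative in [A] of [ln (level_modulus phi A)], written with the sines
   and cosines of [A] and of [B = phi - (K+1) A]. *)
Lemma ln_level_modulus_derive_pos K sA cA sB cB : 0 < K -> 0 < sA -> 0 < sB ->
  0 < sA * cB + cA * sB ->
  0 < cA / sA - K * K * (cA * cB - sA * sB) / (sA * cB + cA * sB) + (K + 1) * (K + 1) * cB / sB.
Proof.
  intros HK HA HB H2.
  (* the expression is a sum of two squares over a positive denominator *)
  replace (cA / sA - K * K * (cA * cB - sA * sB) / (sA * cB + cA * sB)
           + (K + 1) * (K + 1) * cB / sB)
    with (((cA * sB + (K + 1) * sA * cB) ^ 2 + K ^ 2 * sA ^ 2 * sB ^ 2)
          / (sA * (sA * cB + cA * sB) * sB)) by (field; repeat split; lra).
  apply Rdiv_lt_0_compat.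
  - assert (0 < K ^ 2 * sA ^ 2 * sB ^ 2)
      by (apply Rmult_lt_0_compat; [apply Rmult_lt_0_compat|]; apply pow_lt; lra).
    pose proof (pow2_ge_0 (cA * sB + (K + 1) * sA * cB)). lra.
  - repeat apply Rmult_lt_0_compat; lra.
Qed.

Section Omega_plus_construction.

(* Here [d = k + 1]. *)
Variable k : nat.
Hypothesis Hk : (1 <= k)%nat.

Lemma INR_k_ge1 : 1 <= INR k.
Proof. apply (le_INR 1), Hk. Qed.

Lemma INR_Sk_pos : 0 < INR (S k).
Proof. apply lt_0_INR, Nat.lt_0_succ. Qed.

Lemma gt_neg_inv_iff x : - / INR (S k) < x <-> -1 < INR (S k) * x.
Proof.
  pose proof INR_Sk_pos as HD.
  replace (-1) with (INR (S k) * - / INR (S k)) by (field; lra).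
  split; intro H; [apply Rmult_lt_compat_l; assumption | apply Rmult_lt_reg_l in H; assumption].
Qed.

Lemma fd_succ w : fd (S k) w = Cmult w (Cpow (Csucc w) k).
Proof. unfold fd, Csucc. now replace (S k - 1)%nat with k by lia. Qed.

(* A continuous determination of the argument of [fd (S k) w] on the upper
   half-plane. *)
Definition total_arg (w : C) : R := arg_up w + INR k * arg_up (Csucc w).

Definition fd_modulus (A B : R) : R := sin A / sin B * (sin (A + B) / sin B) ^ k.

Lemma fd_sine_point A B : sin B <> 0 ->
  fd (S k) (sine_point A B) = polar (fd_modulus A B) (INR (S k) * A + B).
Proof.
  intro HB. rewrite fd_succ, Csucc_sine_point, polar_pow by exact HB.
  unfold sine_point at 1. rewrite polar_mult, S_INR. unfold fd_modulus. f_equal. ring.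
Qed.

Lemma fd_modulus_pos A B : 0 < A -> 0 < B -> A + B < PI -> 0 < fd_modulus A B.
Proof.
  intros HA HB HAB.
  assert (0 < sin A) by (apply sin_gt_0; lra).
  assert (0 < sin B) by (apply sin_gt_0; lra).
  assert (0 < sin (A + B)) by (apply sin_gt_0; lra).
  apply Rmult_lt_0_compat; [|apply pow_lt]; apply Rdiv_lt_0_compat; assumption.
Qed.

(* The modulus of [fd (S k)] along the level curve [total_arg = phi],
   parametrised by [A = arg (w + 1)]. *)
Definition level_modulus (phi A : R) : R := fd_modulus A (phi - INR (S k) * A).

Lemma level_modulus_increasing phi : 0 < phi <= PI -> forall x y, 0 < x -> x < y ->
  INR (S k) * y < phi -> level_modulus phi x < level_modulus phi y.
Proof.
  intros Hphi x y Hx Hxy Hy.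
  pose proof INR_k_ge1 as HK. rewrite S_INR in *. set (K := INR k) in *.
  assert (Hsin : forall A, 0 < A -> (K + 1) * A < phi ->
    0 < sin A /\ 0 < sin (phi - K * A) /\ 0 < sin (phi - (K + 1) * A)).
  { intros A HA HA'. repeat split; apply sin_gt_0; nra. }
  assert (Hln : forall A, 0 < A -> (K + 1) * A < phi -> level_modulus phi A =
    exp (ln (sin A) + K * ln (sin (phi - K * A)) - (K + 1) * ln (sin (phi - (K + 1) * A)))).
  { intros A HA HA'. destruct (Hsin A HA HA') as (s1 & s2 & s3).
    unfold level_modulus, fd_modulus. rewrite S_INR. fold K.
    replace (A + (phi - (K + 1) * A)) with (phi - K * A) by ring.
    assert (P1 : 0 < sin A / sin (phi - (K + 1) * A)) by (apply Rdiv_lt_0_compat; assumption).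
    assert (P2 : 0 < sin (phi - K * A) / sin (phi - (K + 1) * A))
      by (apply Rdiv_lt_0_compat; assumption).
    rewrite <- (exp_ln _ (Rmult_lt_0_compat _ _ P1 (pow_lt _ k P2))). f_equal.
    rewrite ln_mult, ln_pow, !ln_div by (try apply pow_lt; assumption). fold K. ring. }
  rewrite !Hln by nra. apply exp_increasing.
  apply (incr_function
    (fun A => ln (sin A) + K * ln (sin (phi - K * A)) - (K + 1) * ln (sin (phi - (K + 1) * A)))
    (Finite 0) (Finite (phi / (K + 1)))
    (fun A => cos A / sin A - K * K * cos (phi - K * A) / sin (phi - K * A)
       + (K + 1) * (K + 1) * cos (phi - (K + 1) * A) / sin (phi - (K + 1) * A)));
    simpl; try lra.
  - intros A HA1 HA2. apply Rlt_div_r in HA2; [|lra]. rewrite Rmult_comm in HA2.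
    destruct (Hsin A HA1 HA2) as (s1 & s2 & s3).
    auto_derive; [repeat split; assumption|].
    replace (phi + - (K * A)) with (phi - K * A) by ring.
    replace (phi + - ((K + 1) * A)) with (phi - (K + 1) * A) by ring.
    field. repeat split; lra.
  - intros A HA1 HA2. apply Rlt_div_r in HA2; [|lra]. rewrite Rmult_comm in HA2.
    destruct (Hsin A HA1 HA2) as (s1 & s2 & s3).
    replace (phi - K * A) with (A + (phi - (K + 1) * A)) in * by ring.
    rewrite sin_plus in *. rewrite cos_plus.
    apply Rlt_gt, ln_level_modulus_derive_pos; lra.
  - apply Rlt_div_r; lra.
Qed.

Lemma level_modulus_surj phi R : 0 < phi < PI -> 0 < R ->
  exists A, 0 < A /\ INR (S k) * A < phi /\ level_modulus phi A = R.
Proof.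
  intros Hphi HR.
  pose proof INR_k_ge1 as HK. pose proof (S_INR k) as HSK.
  set (D := INR (S k)) in *.
  set (A0 := phi / D).
  assert (HA0 : 0 < A0) by (apply Rdiv_lt_0_compat; lra).
  assert (HDA0 : D * A0 = phi) by (unfold A0; field; lra).
  assert (Hsin : forall A, 0 <= A < A0 -> 0 < sin (phi - D * A)) by (intros; apply sin_gt_0; nra).
  assert (H0 : level_modulus phi 0 = 0).
  { unfold level_modulus, fd_modulus. rewrite sin_0. unfold Rdiv. ring. }
  set (q := fun A => sin (phi - D * A) / sin A * (sin (phi - D * A) / sin (A + (phi - D * A))) ^ k).
  destruct (IVT_to_pole (level_modulus phi) q 0 A0 R) as [A [HA HAR]]; [lra | | | | | lra |].
  - intros x Hx. apply continuous_of_ex_derive. unfold level_modulus, fd_modulus. fold D.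
    auto_derive. replace (phi + - (D * x)) with (phi - D * x) by ring.
    pose proof (Hsin x Hx). lra.
  - intros A HA. pose proof (Hsin A ltac:(lra)).
    assert (0 < sin A) by (apply sin_gt_0; nra).
    assert (0 < sin (A + (phi - D * A))) by (apply sin_gt_0; nra).
    split.
    + apply Rmult_lt_0_compat; [|apply pow_lt]; apply Rdiv_lt_0_compat; assumption.
    + unfold level_modulus, fd_modulus, q. fold D.
      rewrite Rinv_mult, <- pow_inv, !Rinv_div. reflexivity.
  - apply continuous_of_ex_derive. unfold q. auto_derive.
    replace (A0 + (phi + - (D * A0))) with A0 by lra.
    assert (0 < sin A0) by (apply sin_gt_0; nra). lra.
  - unfold q. rewrite HDA0, Rminus_diag, sin_0. unfold Rdiv. ring.
  - exists A. split; [|split; [nra | exact HAR]].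
    destruct HA as [[HA|<-] _]; [exact HA | lra].
Qed.

(** * The curve [Gamma_up] *)

(* [|fd (S k) w|] at the critical point [w = -1/(k+1)] of [fd (S k)]. *)
Definition crit_modulus : R := / INR (S k) * (INR k / INR (S k)) ^ k.

Lemma rsf_pow : rsf (S k) ^ (S k) = crit_modulus.
Proof.
  pose proof INR_k_ge1 as HK. pose proof (S_INR k) as HSK.
  assert (H1 : 0 < 1 - / INR (S k)).
  { assert (/ INR (S k) < 1) by (rewrite <- Rinv_1; apply Rinv_lt_contravar; lra). lra. }
  unfold rsf, crit_modulus. rewrite Rpow_mult_distr.
  rewrite <- !Rpower_pow by apply exp_pos.
  rewrite !Rpower_mult.
  replace (- / INR (S k) * INR (S k)) with (- 1) by (field; lra).
  replace ((1 - / INR (S k)) * INR (S k)) with (INR k) by (field_simplify; lra).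
  rewrite Rpower_pow by exact H1.
  replace (Rpower (INR (S k)) (-1)) with (Rpower (INR (S k)) (Ropp 1)) by (f_equal; ring).
  rewrite Rpower_Ropp, Rpower_1 by lra.
  f_equal. f_equal. rewrite HSK. field. lra.
Qed.

Lemma cut_ray_iff z : cut_ray (S k) z <-> Im z = 0 /\ Re z <= - crit_modulus.
Proof. unfold cut_ray. rewrite rsf_pow. tauto. Qed.

Definition gamma_angle (t : R) : R := PI / INR (S k) * (t ^ 2 / (1 + t ^ 2)).

(* On the level curve [total_arg w = PI] the law of sines gives
   [w = polar (1 / cheb (k+1) A) (PI - k A)] with [A = arg (w+1)], and [t]
   runs over [0, +oo) while [A] runs over [0, PI/(k+1)). *)
Definition gamma_up (t : R) : C :=
  polar (/ cheb (S k) (gamma_angle t)) (PI - INR k * gamma_angle t).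

Definition gamma_modulus (A : R) : R := / cheb (S k) A * (cheb k A / cheb (S k) A) ^ k.

Lemma gamma_angle_range t : 0 <= gamma_angle t /\ INR (S k) * gamma_angle t < PI.
Proof.
  unfold gamma_angle. pose proof INR_Sk_pos as HD.
  pose proof (pow2_ge_0 t). pose proof PI_RGT_0.
  assert (0 <= t ^ 2 / (1 + t ^ 2) < 1).
  { split; [apply Rdiv_le_0_compat; lra|]. apply Rlt_div_l; lra. }
  split.
  - apply Rmult_le_pos; [apply Rlt_le, Rdiv_lt_0_compat|]; lra.
  - replace (INR (S k) * (PI / INR (S k) * (t ^ 2 / (1 + t ^ 2))))
      with (PI * (t ^ 2 / (1 + t ^ 2))) by (field; lra).
    nra.
Qed.

Lemma gamma_angle_0 : gamma_angle 0 = 0.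
Proof. unfold gamma_angle. rewrite pow_i by lia. unfold Rdiv. ring. Qed.

Lemma gamma_angle_pos t : 0 < t -> 0 < gamma_angle t.
Proof.
  intro Ht. unfold gamma_angle. pose proof INR_Sk_pos.
  pose proof PI_RGT_0. pose proof (pow_lt t 2 Ht).
  apply Rmult_lt_0_compat; apply Rdiv_lt_0_compat; lra.
Qed.

Lemma gamma_angle_surj A : 0 <= A -> INR (S k) * A < PI ->
  exists t, 0 <= t /\ gamma_angle t = A.
Proof.
  intros HA HDA. pose proof INR_Sk_pos. pose proof PI_RGT_0.
  set (u := INR (S k) * A / PI).
  assert (Hu : 0 <= u < 1).
  { unfold u. split; [apply Rdiv_le_0_compat; nra | apply Rlt_div_l; lra]. }
  assert (Hq : 0 <= u / (1 - u)) by (apply Rdiv_le_0_compat; lra).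
  exists (sqrt (u / (1 - u))). split; [apply sqrt_pos|].
  unfold gamma_angle. rewrite pow2_sqrt by exact Hq.
  replace (u / (1 - u) / (1 + u / (1 - u))) with u by (field; lra).
  unfold u. field. lra.
Qed.

Lemma gamma_angle_inj s t : 0 <= s -> 0 <= t -> gamma_angle s = gamma_angle t -> s = t.
Proof.
  intros Hs Ht E. unfold gamma_angle in E.
  pose proof INR_Sk_pos. pose proof PI_RGT_0.
  apply Rmult_eq_reg_l in E; [|apply Rgt_not_eq, Rdiv_lt_0_compat; lra].
  pose proof (pow2_ge_0 s). pose proof (pow2_ge_0 t).
  assert (s ^ 2 = t ^ 2).
  { apply (f_equal (fun v => v / (1 - v))) in E.
    replace (s ^ 2 / (1 + s ^ 2) / (1 - s ^ 2 / (1 + s ^ 2))) with (s ^ 2) in E by (field; lra).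
    replace (t ^ 2 / (1 + t ^ 2) / (1 - t ^ 2 / (1 + t ^ 2))) with (t ^ 2) in E by (field; lra).
    exact E. }
  nra.
Qed.

Lemma cheb_gamma_pos t : 0 < cheb (S k) (gamma_angle t).
Proof. destruct (gamma_angle_range t). apply cheb_pos; [lia | assumption..]. Qed.

Lemma gamma_up_0 : gamma_up 0 = RtoC (- / INR (S k)).
Proof.
  unfold gamma_up. rewrite gamma_angle_0, cheb_0, Rmult_0_r, Rminus_0_r.
  unfold polar, RtoC. rewrite cos_PI, sin_PI. f_equal; ring.
Qed.

Lemma continuous_gamma_angle t : continuous gamma_angle t.
Proof.
  apply continuous_of_ex_derive. unfold gamma_angle. auto_derive.
  pose proof (pow2_ge_0 t). simpl in *. nra.
Qed.

Lemma continuous_gamma_up t : continuous gamma_up t.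
Proof.
  assert (Hr : continuous (fun t => / cheb (S k) (gamma_angle t)) t).
  { apply continuous_Rinv_comp; [|pose proof (cheb_gamma_pos t); lra].
    apply (continuous_comp gamma_angle (cheb (S k)));
      [apply continuous_gamma_angle | apply continuous_cheb]. }
  apply continuous_pair.
  - apply (continuous_mult _ (fun t => cos (PI - INR k * gamma_angle t))); [exact Hr|].
    apply (continuous_comp gamma_angle (fun A => cos (PI - INR k * A)));
      [apply continuous_gamma_angle|].
    apply continuous_of_ex_derive. auto_derive. auto.
  - apply (continuous_mult _ (fun t => sin (PI - INR k * gamma_angle t))); [exact Hr|].
    apply (continuous_comp gamma_angle (fun A => sin (PI - INR k * A)));
      [apply continuous_gamma_angle|].
    apply continuous_of_ex_derive. auto_derive. auto.
Qed.

Lemma fd_polar_level A : cheb (S k) A <> 0 ->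
  fd (S k) (polar (/ cheb (S k) A) (PI - INR k * A)) = RtoC (- gamma_modulus A).
Proof.
  intro HA.
  assert (Hsucc : Csucc (polar (/ cheb (S k) A) (PI - INR k * A))
                  = polar (cheb k A / cheb (S k) A) A).
  { unfold Csucc, polar, Cplus, RtoC; cbn [fst snd].
    rewrite Rtrigo_facts.cos_pi_minus, sin_PI_x, sin_mul_cheb.
    f_equal; [|field; exact HA].
    replace (/ cheb (S k) A * - cos (INR k * A) + 1)
      with ((cheb (S k) A - cos (INR k * A)) / cheb (S k) A) by (field; exact HA).
    simpl cheb at 1. field. exact HA. }
  rewrite fd_succ, Hsucc, polar_pow, polar_mult.
  replace (PI - INR k * A + INR k * A) with PI by ring.
  unfold polar, RtoC, gamma_modulus. rewrite cos_PI, sin_PI. f_equal; ring.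
Qed.

Lemma fd_gamma_up t : fd (S k) (gamma_up t) = RtoC (- gamma_modulus (gamma_angle t)).
Proof. apply fd_polar_level. pose proof (cheb_gamma_pos t). lra. Qed.

Lemma gamma_modulus_0 : gamma_modulus 0 = crit_modulus.
Proof. unfold gamma_modulus, crit_modulus. rewrite !cheb_0. reflexivity. Qed.

Lemma gamma_modulus_level A : 0 < A -> INR (S k) * A < PI -> gamma_modulus A = level_modulus PI A.
Proof.
  intros HA HDA. pose proof INR_k_ge1. pose proof (S_INR k) as HSK.
  assert (0 < sin A) by (apply sin_gt_0; nra).
  assert (0 < cheb (S k) A) by (apply cheb_pos; [lia | lra | exact HDA]).
  unfold gamma_modulus, level_modulus, fd_modulus.
  rewrite sin_PI_x, sin_mul_cheb.
  replace (A + (PI - INR (S k) * A)) with (PI - INR k * A) by (rewrite HSK; ring).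
  rewrite sin_PI_x, sin_mul_cheb. f_equal; [field; lra|]. f_equal. field. lra.
Qed.

Lemma gamma_modulus_increasing x y : 0 <= x -> x < y -> INR (S k) * y < PI ->
  gamma_modulus x < gamma_modulus y.
Proof.
  intros Hx Hxy Hy. pose proof INR_Sk_pos as HD.
  assert (Hpos : forall a b, 0 < a -> a < b -> INR (S k) * b < PI ->
    gamma_modulus a < gamma_modulus b).
  { intros a b Ha Hab Hb.
    assert (INR (S k) * a < INR (S k) * b) by (apply Rmult_lt_compat_l; assumption).
    rewrite !gamma_modulus_level by lra.
    apply level_modulus_increasing; [split; [apply PI_RGT_0 | lra] | assumption..]. }
  destruct (Req_dec x 0) as [->|Hx0]; [|apply Hpos; lra].
  apply (increasing_left_end gamma_modulus 0 (PI / INR (S k))).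
  - apply continuous_of_ex_derive. unfold gamma_modulus. auto_derive.
    repeat split; try apply (ex_derive_cheb (S k)); try apply (ex_derive_cheb k);
      change (cheb (S k) 0 <> 0); rewrite cheb_0; lra.
  - intros a b Ha Hab Hb. apply Rlt_div_r in Hb; [|lra]. rewrite Rmult_comm in Hb.
    apply Hpos; assumption.
  - split; [exact Hxy | apply Rlt_div_r; [lra | rewrite Rmult_comm; exact Hy]].
Qed.

Lemma gamma_modulus_surj y : crit_modulus <= y ->
  exists A, 0 <= A /\ INR (S k) * A < PI /\ gamma_modulus A = y.
Proof.
  intros Hy.
  pose proof INR_k_ge1 as HK. pose proof (S_INR k) as HSK. pose proof PI_RGT_0.
  set (A0 := PI / INR (S k)).
  assert (HA0 : 0 < A0) by (apply Rdiv_lt_0_compat; lra).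
  assert (HDA0 : INR (S k) * A0 = PI) by (unfold A0; field; lra).
  assert (Hcheb : forall A, 0 <= A <= A0 -> 0 < cheb k A /\ (A < A0 -> 0 < cheb (S k) A)).
  { intros A HA. split; [|intro]; apply cheb_pos; try lia; nra. }
  assert (Hroot : cheb (S k) A0 = 0) by (apply cheb_root; lia).
  set (q := fun A => cheb (S k) A * (cheb (S k) A / cheb k A) ^ k).
  destruct (IVT_to_pole gamma_modulus q 0 A0 y) as [A [HA HAy]];
    [lra | | | | | rewrite gamma_modulus_0; exact Hy |].
  - intros x Hx. apply continuous_of_ex_derive. unfold gamma_modulus. auto_derive.
    destruct (Hcheb x ltac:(lra)) as [_ c1]. specialize (c1 (proj2 Hx)). simpl cheb in c1.
    repeat split; try apply (ex_derive_cheb (S k)); try apply (ex_derive_cheb k); lra.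
  - intros A HA. destruct (Hcheb A ltac:(lra)) as [c0 c1]. specialize (c1 (proj2 HA)). split.
    + apply Rmult_lt_0_compat; [|apply pow_lt, Rdiv_lt_0_compat]; assumption.
    + unfold gamma_modulus, q. rewrite Rinv_mult, <- pow_inv, Rinv_div. reflexivity.
  - apply continuous_of_ex_derive. unfold q. auto_derive.
    destruct (Hcheb A0 ltac:(lra)) as [c0 _].
    repeat split; try apply (ex_derive_cheb (S k)); try apply (ex_derive_cheb k); lra.
  - unfold q. rewrite Hroot. ring.
  - exists A. split; [lra | split; [nra | exact HAy]].
Qed.

Lemma gamma_up_sine_point t : 0 < t ->
  gamma_up t = sine_point (gamma_angle t) (PI - INR (S k) * gamma_angle t).
Proof.
  intro Ht. pose proof (gamma_angle_pos t Ht). destruct (gamma_angle_range t).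
  pose proof (cheb_gamma_pos t). pose proof (S_INR k) as HSK. pose proof INR_k_ge1.
  assert (0 < sin (gamma_angle t)) by (apply sin_gt_0; nra).
  unfold gamma_up, sine_point. rewrite sin_PI_x, sin_mul_cheb. f_equal.
  - field. lra.
  - rewrite HSK. ring.
Qed.

Lemma gamma_up_level t : 0 < t -> 0 < Im (gamma_up t) /\ total_arg (gamma_up t) = PI.
Proof.
  intro Ht. pose proof (gamma_angle_pos t Ht). destruct (gamma_angle_range t).
  pose proof INR_k_ge1. pose proof (S_INR k) as HSK.
  rewrite gamma_up_sine_point by exact Ht.
  destruct (sine_point_angles (gamma_angle t) (PI - INR (S k) * gamma_angle t))
    as (Him & Harg & Hsucc); try nra.
  split; [exact Him|]. unfold total_arg. rewrite Harg, Hsucc, HSK. ring.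
Qed.

Lemma gamma_up_of_level w : 0 < Im w -> total_arg w = PI -> exists t, 0 < t /\ w = gamma_up t.
Proof.
  intros Hy Hs. pose proof INR_k_ge1. pose proof (S_INR k) as HSK.
  destruct (sine_point_of_arg w Hy) as (HA & HB & HAB & Ew).
  set (A := arg_up (Csucc w)) in *.
  assert (HBv : arg_up w - A = PI - INR (S k) * A) 
    by (unfold total_arg in Hs; fold A in Hs; rewrite HSK; lra).
  rewrite HBv in Ew.
  destruct (gamma_angle_surj A) as (t & Ht & EA); [lra | nra |].
  assert (Ht0 : 0 < t) by (destruct Ht as [|<-]; [assumption | rewrite gamma_angle_0 in EA; lra]).
  exists t. split; [exact Ht0|]. rewrite gamma_up_sine_point, EA by exact Ht0. exact Ew.
Qed.

Lemma gamma_modulus_ge_crit A : 0 <= A -> INR (S k) * A < PI -> crit_modulus <= gamma_modulus A.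
Proof.
  intros HA HDA. rewrite <- gamma_modulus_0.
  destruct HA as [HA|<-]; [left; apply gamma_modulus_increasing; lra | lra].
Qed.

Lemma fd_gamma_up_inj s t : 0 <= s -> 0 <= t ->
  fd (S k) (gamma_up s) = fd (S k) (gamma_up t) -> s = t.
Proof.
  intros Hs Ht E. rewrite !fd_gamma_up in E. injection E as E.
  apply gamma_angle_inj; [assumption..|].
  destruct (gamma_angle_range s) as [Hs0 Hs1], (gamma_angle_range t) as [Ht0 Ht1].
  destruct (Rtotal_order (gamma_angle s) (gamma_angle t)) as [L|[L|L]]; [|exact L|].
  - pose proof (gamma_modulus_increasing _ _ Hs0 L Ht1). lra.
  - pose proof (gamma_modulus_increasing _ _ Ht0 L Hs1). lra.
Qed.

Lemma gamma_up_unbounded M : exists T, forall t, T <= t -> M < Cmod (gamma_up t).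
Proof.
  pose proof INR_Sk_pos as HD. pose proof PI_RGT_0.
  set (A0 := PI / INR (S k)).
  assert (HA0 : 0 < A0) by (apply Rdiv_lt_0_compat; lra).
  assert (Hroot : cheb (S k) A0 = 0) by (apply cheb_root; lia).
  destruct (inv_gt_near_root (cheb (S k)) A0 (continuous_cheb _ _) Hroot M) as [del [Hdel Hnear]].
  exists (A0 / del + 1). intros t Ht.
  pose proof (pow2_ge_0 t).
  assert (Hdt : Rabs (gamma_angle t - A0) < del).
  { replace (gamma_angle t - A0) with (- (A0 / (1 + t ^ 2)))
      by (unfold gamma_angle; fold A0; field; lra).
    rewrite Rabs_Ropp, Rabs_right by (apply Rle_ge, Rdiv_le_0_compat; lra).
    apply Rlt_div_l; [lra|].
    assert (A0 < del * (A0 / del + 1)) by (field_simplify; lra).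
    assert (t <= t ^ 2 + 1) by nra. nra. }
  unfold gamma_up. rewrite Cmod_polar by (left; apply Rinv_0_lt_compat, cheb_gamma_pos).
  apply Hnear; [exact Hdt | apply cheb_gamma_pos].
Qed.

Definition fdR (x : R) : R := x * (x + 1) ^ k.

Lemma fd_real x : fd (S k) (RtoC x) = RtoC (fdR x).
Proof.
  rewrite fd_succ. unfold Csucc, fdR.
  replace (Cplus (RtoC x) (RtoC 1)) with (RtoC (x + 1))
    by (unfold Cplus, RtoC; cbn [fst snd]; f_equal; ring).
  rewrite <- RtoC_pow. unfold Cmult, RtoC; cbn [fst snd]. f_equal; ring.
Qed.

Lemma fdR_increasing x y : - / INR (S k) < x -> x < y -> fdR x < fdR y.
Proof.
  intros Hx Hxy.
  pose proof (S_INR k) as HSK. pose proof INR_k_ge1 as HK.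
  assert (Hd : -1 < - / INR (S k))
    by (assert (/ INR (S k) < 1) by (rewrite <- Rinv_1; apply Rinv_lt_contravar; lra); lra).
  apply (incr_function fdR (Finite (- / INR (S k))) p_infty
    (fun x => (x + 1) ^ (k - 1) * (INR (S k) * x + 1))); [| | exact Hx | exact Hxy | exact I].
  - intros z _ _. unfold fdR. auto_derive; [exact I|].
    destruct k as [|k']; [lia|]. replace (S k' - 1)%nat with k' by lia.
    rewrite <- tech_pow_Rmult, HSK. simpl pred. ring.
  - intros z Hz _. change (- / INR (S k) < z) in Hz.
    apply Rlt_gt, Rmult_lt_0_compat; [apply pow_lt; lra|].
    apply gt_neg_inv_iff in Hz. lra.
Qed.

Lemma fdR_left : fdR (- / INR (S k)) = - crit_modulus.
Proof.
  pose proof INR_Sk_pos.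
  unfold fdR, crit_modulus.
  replace (- / INR (S k) + 1) with (INR k / INR (S k)) by (rewrite S_INR in *; field; lra). ring.
Qed.

Lemma continuous_fdR x : continuous fdR x.
Proof. apply continuous_of_ex_derive. unfold fdR. auto_derive. exact I. Qed.

Lemma fdR_gt x : - / INR (S k) < x -> - crit_modulus < fdR x.
Proof.
  intros Hx. rewrite <- fdR_left.
  apply (increasing_left_end fdR (- / INR (S k)) (x + 1)); [apply continuous_fdR | | lra].
  intros a b Ha Hab _. apply fdR_increasing; assumption.
Qed.

Lemma fdR_surj y : - crit_modulus < y -> exists x, - / INR (S k) < x /\ fdR x = y.
Proof.
  intros Hy.
  assert (Hd : 0 < / INR (S k)) by apply Rinv_0_lt_compat, INR_Sk_pos.
  set (X := Rmax y 0 + 1).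
  assert (HX : 1 <= X /\ y < X)
    by (unfold X; pose proof (Rmax_r y 0); pose proof (Rmax_l y 0); lra).
  assert (HXy : y < fdR X).
  { unfold fdR. assert (1 <= (X + 1) ^ k) by (apply pow_R1_Rle; lra). nra. }
  destruct (IVT_left_closed fdR (- / INR (S k)) X y) as [x [Hx Hxy]];
    [lra | intros; apply continuous_fdR | rewrite fdR_left; lra | exact HXy |].
  exists x. split; [|exact Hxy].
  destruct Hx as [[Hx|Hx] _]; [exact Hx|]. rewrite <- Hx, fdR_left in Hxy. lra.
Qed.

(** * The domain [Omega_plus] *)

Definition upper_part (w : C) : Prop := 0 < Im w /\ total_arg w < PI.

Definition Omega_plus (w : C) : Prop :=
  (Im w = 0 /\ - / INR (S k) < Re w) \/ upper_part w \/ upper_part (Cconj w).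

Definition Gamma_perp (z : C) : Prop :=
  image_from0 gamma_up z \/ exists w, image_from0 gamma_up w /\ z = Cconj w.

Lemma Omega_plus_conj w : Omega_plus (Cconj w) <-> Omega_plus w.
Proof.
  unfold Omega_plus. rewrite Cconj_conj, im_conj, re_conj.
  split; intros [H|[H|H]]; lra || tauto.
Qed.

Lemma total_arg_shift_lt w c : 0 < Im w -> 0 < c -> total_arg (Cplus w (RtoC c)) < total_arg w.
Proof.
  intros Hy Hc. unfold total_arg.
  replace (Csucc (Cplus w (RtoC c))) with (Cplus (Csucc w) (RtoC c))
    by (unfold Csucc, Cplus, RtoC; cbn [fst snd]; f_equal; ring).
  assert (arg_up (Cplus w (RtoC c)) < arg_up w) by (apply arg_up_shift_lt; assumption).
  assert (arg_up (Cplus (Csucc w) (RtoC c)) < arg_up (Csucc w))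
    by (apply arg_up_shift_lt; [rewrite Im_Csucc|]; assumption).
  pose proof (pos_INR k). nra.
Qed.

Lemma total_arg_scale_le w l : 0 < Im w -> 0 < l <= 1 ->
  total_arg (Cmult (RtoC l) w) <= total_arg w.
Proof.
  intros Hy Hl. unfold total_arg. rewrite arg_up_scale by lra.
  assert (arg_up (Csucc (Cmult (RtoC l) w)) <= arg_up (Csucc w)).
  { unfold arg_up. rewrite !Re_Csucc, !Im_Csucc, RtoC_mult_pair. unfold Re, Im; cbn [fst snd].
    fold (Re w) (Im w).
    assert ((Re w + 1) / Im w <= (l * Re w + 1) / (l * Im w)).
    { replace ((l * Re w + 1) / (l * Im w)) with ((Re w + 1) / Im w + (1 - l) / (l * Im w))
        by (field; split; lra).
      assert (0 <= (1 - l) / (l * Im w)) by (apply Rdiv_le_0_compat; nra). lra. }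
    destruct H as [H|H]; [pose proof (atan_increasing _ _ H) | rewrite H]; lra. }
  pose proof (pos_INR k). nra.
Qed.

Lemma upper_part_shift w c : 0 < Im w -> total_arg w <= PI -> 0 < c ->
  upper_part (Cplus w (RtoC c)).
Proof.
  intros Hy Hs Hc. unfold upper_part. rewrite Im_shift. split; [exact Hy|].
  pose proof (total_arg_shift_lt w c Hy Hc). lra.
Qed.

Lemma Omega_plus_star : star_shaped Omega_plus.
Proof.
  pose proof INR_Sk_pos as HD.
  assert (Hd : 0 < / INR (S k)) by (apply Rinv_0_lt_compat; exact HD).
  split.
  - left. unfold RtoC, Im, Re; cbn [fst snd]. split; [reflexivity | lra].
  - intros w l Hw Hl.
    destruct (Req_dec l 0) as [->|Hl0].
    { left. rewrite RtoC_mult_pair. unfold Re, Im; cbn [fst snd]. split; [ring | lra]. }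
    assert (Hup : forall w, upper_part w -> upper_part (Cmult (RtoC l) w)).
    { intros u [Hy Hs]. pose proof (total_arg_scale_le u l Hy ltac:(lra)).
      split; [rewrite RtoC_mult_pair; unfold Im in *; cbn [fst snd]; nra | lra]. }
    destruct Hw as [[Hy Hx]|[Hw|Hw]].
    + left. rewrite RtoC_mult_pair. unfold Re, Im in *; cbn [fst snd].
      rewrite Hy. split; [ring|]. destruct (Rle_or_lt 0 (fst w)); nra.
    + right; left. apply Hup, Hw.
    + right; right. replace (Cconj (Cmult (RtoC l) w)) with (Cmult (RtoC l) (Cconj w))
        by (unfold Cconj, Cmult, RtoC; cbn [fst snd]; f_equal; ring).
      apply Hup, Hw.
Qed.

Lemma total_arg_ge_PI_left w : 0 < Im w -> Re w <= - / INR (S k) -> PI <= total_arg w.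
Proof.
  intros Hy Hx.
  pose proof INR_k_ge1 as HK. pose proof (S_INR k) as HSK.
  assert (Hy1 : 0 < Im (Csucc w)) by (rewrite Im_Csucc; exact Hy).
  assert (Hd : 0 < / INR (S k)) by (apply Rinv_0_lt_compat; lra).
  pose proof (arg_up_range w). pose proof (arg_up_range (Csucc w)).
  assert (arg_up (Csucc w) < arg_up w) by (apply arg_up_shift_lt; lra).
  unfold total_arg.
  destruct (Rle_or_lt (Re w) (-1)) as [Hx1|Hx1].
  { assert (PI / 2 <= arg_up (Csucc w)) by (apply arg_up_ge_half; [|rewrite Re_Csucc]; lra). nra. }
  (* [PI - arg w <= atan (k Im w / (Re w + 1)) <= k arg (w + 1)] *)
  assert (E1 : arg_up (Csucc w) = atan (Im w / (Re w + 1)))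
    by (rewrite arg_up_pos_Re, Im_Csucc, Re_Csucc;
        [reflexivity | exact Hy1 | rewrite Re_Csucc; lra]).
  assert (E0 : PI - arg_up w = atan (Im w / - Re w)) by (apply arg_up_neg_Re; lra).
  assert (Hb : Im w / - Re w <= INR k * (Im w / (Re w + 1))).
  { assert (Hx2 : Re w + 1 <= INR k * - Re w).
    { assert (~ (-1 < INR (S k) * Re w)) by (rewrite <- gt_neg_inv_iff; lra).
      rewrite HSK in *. nra. }
    unfold Rdiv. apply (Rmult_le_reg_r (- Re w * (Re w + 1))); [nra|].
    replace (Im w * / - Re w * (- Re w * (Re w + 1))) with (Im w * (Re w + 1)) by (field; lra).
    replace (INR k * (Im w * / (Re w + 1)) * (- Re w * (Re w + 1)))
      with (Im w * (INR k * - Re w)) by (field; lra).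
    nra. }
  assert (atan (Im w / - Re w) <= atan (INR k * (Im w / (Re w + 1)))).
  { destruct Hb as [Hb|Hb]; [left; apply atan_increasing, Hb | rewrite Hb; lra]. }
  pose proof (atan_mul_le (INR k) (Im w / (Re w + 1)) HK ltac:(apply Rdiv_le_0_compat; lra)).
  rewrite E1. lra.
Qed.

Lemma Omega_plus_Re w : Omega_plus w -> - / INR (S k) < Re w.
Proof.
  intros [[_ Hx]|[[Hy Hs]|[Hy Hs]]]; [exact Hx| |];
    apply Rnot_le_lt; intro Hx.
  - pose proof (total_arg_ge_PI_left w Hy Hx). lra.
  - rewrite <- re_conj in Hx. pose proof (total_arg_ge_PI_left _ Hy Hx). lra.
Qed.

Lemma Omega_plus_shift w c : Omega_plus w \/ Gamma_perp w -> 0 < c -> Omega_plus (Cplus w (RtoC c)).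
Proof.
  intros Hw Hc.
  assert (Hgamma : forall z, image_from0 gamma_up z -> Omega_plus (Cplus z (RtoC c))).
  { intros z [t [[Ht|Ht] ->]].
    - right; left. destruct (gamma_up_level t Ht). apply upper_part_shift; lra.
    - left. subst t. rewrite gamma_up_0, Im_shift, Re_shift. split; [reflexivity|].
      change (Re (RtoC (- / INR (S k)))) with (- / INR (S k)). lra. }
  destruct Hw as [[[Hy Hx]|[[Hy Hs]|[Hy Hs]]]|[Hw|[w' [Hw' ->]]]].
  - left. rewrite Im_shift, Re_shift. split; [exact Hy | lra].
  - right; left. apply upper_part_shift; lra.
  - right; right. rewrite Cconj_shift. apply upper_part_shift; lra.
  - apply Hgamma, Hw.
  - apply Omega_plus_conj. rewrite Cconj_shift, Cconj_conj. apply Hgamma, Hw'.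
Qed.

(* An open neighbourhood of the ray [(-1/(k+1), +oo)] on which [total_arg < PI]
   off the axis; it makes [Omega_plus] open at its real points. *)
Definition near_axis (w : C) : Prop :=
  INR k * Cmod w < Re w + 1 \/ INR (S k) * Rabs (Im w) < PI * Re w.

Lemma near_axis_total_arg w : 0 < Im w -> near_axis w -> total_arg w < PI.
Proof.
  intros Hy Hw.
  pose proof INR_k_ge1 as HK. pose proof (S_INR k) as HSK.
  assert (Hy1 : 0 < Im (Csucc w)) by (rewrite Im_Csucc; exact Hy).
  pose proof (arg_up_range w). pose proof (arg_up_range (Csucc w)).
  pose proof (Cmod_pos_Im w Hy) as Hm.
  unfold total_arg. destruct Hw as [Hw|Hw].
  - (* [k arg (w+1) <= k Im w / (Re w + 1) < Im w / |w| = sin (PI - arg w) < PI - arg w] *)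
    assert (Hx1 : 0 < Re w + 1) by nra.
    assert (A1 : arg_up (Csucc w) <= Im w / (Re w + 1)).
    { rewrite arg_up_pos_Re, Im_Csucc, Re_Csucc by (rewrite ?Re_Csucc; lra).
      apply atan_le_id, Rdiv_le_0_compat; lra. }
    assert (Hsin : Im w / Cmod w = sin (PI - arg_up w)).
    { rewrite sin_PI_x, <- (Cmod_sin_arg_up w Hy). field. lra. }
    assert (sin (PI - arg_up w) < PI - arg_up w) by (apply sin_lt_x; lra).
    assert (INR k * (Im w / (Re w + 1)) < Im w / Cmod w).
    { unfold Rdiv. apply (Rmult_lt_reg_r (Cmod w * (Re w + 1))); [nra|].
      replace (INR k * (Im w * / (Re w + 1)) * (Cmod w * (Re w + 1)))
        with (Im w * (INR k * Cmod w)) by (field; lra).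
      replace (Im w * / Cmod w * (Cmod w * (Re w + 1))) with (Im w * (Re w + 1)) by (field; lra).
      nra. }
    nra.
  - (* [total_arg w < (k+1) arg w <= (k+1) Im w / Re w < PI] *)
    rewrite Rabs_right in Hw by lra.
    assert (Hx : 0 < Re w) by (pose proof PI_RGT_0; nra).
    assert (A0 : arg_up w <= Im w / Re w).
    { rewrite arg_up_pos_Re by assumption. apply atan_le_id, Rdiv_le_0_compat; lra. }
    assert (arg_up (Csucc w) < arg_up w) by (apply arg_up_shift_lt; lra).
    assert (INR (S k) * (Im w / Re w) < PI).
    { unfold Rdiv. apply (Rmult_lt_reg_r (Re w)); [exact Hx|].
      rewrite Rmult_assoc, Rmult_assoc, Rinv_l, Rmult_1_r by lra. exact Hw. }
    rewrite HSK in *. nra.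
Qed.

Lemma near_axis_Re w : near_axis w -> - / INR (S k) < Re w.
Proof.
  intros Hw. apply gt_neg_inv_iff. pose proof (S_INR k) as HSK. pose proof INR_k_ge1.
  pose proof (re_le_Cmod w). pose proof (Rle_abs (- Re w)). rewrite Rabs_Ropp in *.
  destruct Hw as [Hw|Hw]; [nra|].
  pose proof (Rabs_pos (Im w)). pose proof PI_RGT_0. nra.
Qed.

Lemma near_axis_real x : - / INR (S k) < x -> near_axis (RtoC x).
Proof.
  intro Hx. apply gt_neg_inv_iff in Hx. pose proof (S_INR k) as HSK.
  unfold near_axis. rewrite Cmod_R. unfold Re, Im, RtoC; cbn [fst snd].
  destruct (Rle_or_lt x 0) as [Hx0|Hx0].
  - left. rewrite Rabs_left1 by exact Hx0. nra.
  - right. rewrite Rabs_R0. pose proof PI_RGT_0. nra.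
Qed.

Lemma near_axis_conj w : near_axis w -> near_axis (Cconj w).
Proof. unfold near_axis. rewrite Cmod_conj, re_conj, im_conj, Rabs_Ropp. tauto. Qed.

Lemma Omega_plus_cover w : Omega_plus w <-> upper_part w \/ upper_part (Cconj w) \/ near_axis w.
Proof.
  split.
  - intros [[Hy Hx]|[Hw|Hw]]; [|tauto|tauto].
    right; right. rewrite (RtoC_Re w Hy). apply near_axis_real, Hx.
  - intros [Hw|[Hw|Hw]]; [right; left; exact Hw | right; right; exact Hw|].
    destruct (Rtotal_order (Im w) 0) as [Hy|[Hy|Hy]].
    + right; right. split; [rewrite im_conj; lra|].
      apply near_axis_total_arg; [rewrite im_conj; lra | apply near_axis_conj, Hw].
    + left. split; [exact Hy | apply near_axis_Re, Hw].
    + right; left. split; [exact Hy | apply near_axis_total_arg; assumption].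
Qed.

Lemma continuous_total_arg w : Im w <> 0 -> continuous total_arg w.
Proof.
  intro Hy. unfold total_arg.
  apply (continuous_plus (fun u => arg_up u) (fun u => INR k * arg_up (Csucc u))).
  - apply (continuous_ext (fun u => arg_up (Cplus u (RtoC 0)))).
    + intro u. unfold Cplus, RtoC. rewrite !Rplus_0_r. destruct u; reflexivity.
    + apply continuous_arg_up_shift, Hy.
  - apply (continuous_mult (fun _ : C => INR k) (fun u => arg_up (Csucc u)));
      [apply continuous_const | apply continuous_arg_up_shift, Hy].
Qed.

Lemma open_upper_part : open upper_part.
Proof.
  apply (open_ext (fun w => 0 < Im w /\ 0 < PI - total_arg w)); [unfold upper_part; intro; lra|].
  apply open_and_pos; [apply open_pos, continuous_Im|].
  intros w Hw. apply (continuous_minus (fun _ => PI) total_arg);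
    [apply continuous_const | apply continuous_total_arg; lra].
Qed.

Lemma open_near_axis : open near_axis.
Proof.
  apply open_or.
  - apply (open_ext (fun w => 0 < Re w + 1 - INR k * Cmod w)); [intro; lra|].
    apply open_pos. intro w.
    apply (continuous_minus (fun u : C => Re u + 1) (fun u => INR k * Cmod u)).
    + apply (continuous_plus (fun u : C => Re u) (fun _ => 1));
        [apply continuous_Re | apply continuous_const].
    + apply (continuous_mult (fun _ : C => INR k) Cmod);
        [apply continuous_const | apply continuous_Cmod].
  - apply (open_ext (fun w => 0 < PI * Re w - INR (S k) * Rabs (Im w))); [intro; lra|].
    apply open_pos. intro w.
    apply (continuous_minus (fun u => PI * Re u) (fun u => INR (S k) * Rabs (Im u))).
    + apply (continuous_mult (fun _ : C => PI) (fun u => Re u));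
        [apply continuous_const | apply continuous_Re].
    + apply (continuous_mult (fun _ : C => INR (S k)) (fun u => Rabs (Im u)));
        [apply continuous_const|].
      apply (continuous_comp (fun u : C => Im u) Rabs);
        [apply continuous_Im | apply continuous_Rabs].
Qed.

Lemma open_Omega_plus : open Omega_plus.
Proof.
  apply (open_ext _ _ (fun w => iff_sym (Omega_plus_cover w))).
  apply open_or; [exact open_upper_part|]. apply open_or; [|exact open_near_axis].
  apply (open_comp Cconj upper_part); [|exact open_upper_part].
  intros w _. apply continuous_Cconj.
Qed.

Lemma fd_conj w : fd (S k) (Cconj w) = Cconj (fd (S k) w).
Proof.
  rewrite !fd_succ. unfold Csucc. rewrite Cmult_conj, Cpow_conj, Cplus_conj.
  replace (Cconj (RtoC 1)) with (RtoC 1) by (unfold Cconj, RtoC; cbn [fst snd]; f_equal; ring).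
  reflexivity.
Qed.

Lemma level_modulus_pos phi A : 0 < A -> INR (S k) * A < phi -> phi < PI -> 0 < level_modulus phi A.
Proof.
  intros HA HDA Hphi. pose proof (pos_INR k). unfold level_modulus. rewrite S_INR in *.
  apply fd_modulus_pos; nra.
Qed.

Lemma upper_part_level w : upper_part w -> exists A, 0 < A /\ INR (S k) * A < total_arg w /\
  w = sine_point A (total_arg w - INR (S k) * A) /\
  fd (S k) w = polar (level_modulus (total_arg w) A) (total_arg w).
Proof.
  intros [Hy Hs]. pose proof (S_INR k) as HSK. pose proof INR_k_ge1.
  destruct (sine_point_of_arg w Hy) as (HA & HB & HAB & Ew).
  set (A := arg_up (Csucc w)) in *.
  assert (Hsm : total_arg w - INR (S k) * A = arg_up w - A)
    by (unfold total_arg; fold A; rewrite HSK; ring).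
  exists A. rewrite Hsm. split; [exact HA|]. split; [lra|]. split; [exact Ew|].
  rewrite Ew at 1. rewrite fd_sine_point by (apply Rgt_not_eq, sin_gt_0; lra).
  unfold level_modulus. rewrite Hsm. f_equal. lra.
Qed.

Lemma fd_upper_part_Im w : upper_part w -> 0 < Im (fd (S k) w).
Proof.
  intros Hw. destruct (upper_part_level w Hw) as (A & HA & HDA & _ & ->).
  destruct Hw as [_ Hs]. pose proof (pos_INR (S k)).
  apply Rmult_lt_0_compat; [apply level_modulus_pos; assumption | apply sin_gt_0; nra].
Qed.

Lemma fd_upper_part_inj w1 w2 : upper_part w1 -> upper_part w2 ->
  fd (S k) w1 = fd (S k) w2 -> w1 = w2.
Proof.
  intros Hw1 Hw2 E.
  destruct (upper_part_level w1 Hw1) as (A1 & HA1 & HDA1 & Ew1 & Ef1).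
  destruct (upper_part_level w2 Hw2) as (A2 & HA2 & HDA2 & Ew2 & Ef2).
  destruct Hw1 as [_ Hs1], Hw2 as [_ Hs2]. pose proof (pos_INR (S k)).
  pose proof (level_modulus_pos _ _ HA1 HDA1 Hs1).
  pose proof (level_modulus_pos _ _ HA2 HDA2 Hs2).
  assert (Ephi : total_arg w1 = total_arg w2).
  { apply (f_equal arg_up) in E. rewrite Ef1, Ef2, !arg_up_polar in E; nra. }
  assert (Emod : level_modulus (total_arg w1) A1 = level_modulus (total_arg w1) A2).
  { apply (f_equal Cmod) in E. rewrite Ef1, Ef2, !Cmod_polar, <- Ephi in E; lra. }
  rewrite <- Ephi in HDA2.
  assert (HA : A1 = A2).
  { destruct (Rtotal_order A1 A2) as [L|[L|L]]; [exfalso| exact L | exfalso].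
    - pose proof (level_modulus_increasing (total_arg w1) ltac:(nra) A1 A2 HA1 L HDA2). lra.
    - pose proof (level_modulus_increasing (total_arg w1) ltac:(nra) A2 A1 HA2 L HDA1). lra. }
  rewrite Ew1, Ew2, <- Ephi, HA. reflexivity.
Qed.

Lemma fd_upper_part_surj z : 0 < Im z -> exists w, upper_part w /\ fd (S k) w = z.
Proof.
  intros Hz. pose proof (S_INR k) as HSK. pose proof INR_k_ge1.
  pose proof (arg_up_range z).
  destruct (level_modulus_surj (arg_up z) (Cmod z)) as [A (HA & HDA & Hv)];
    [lra | apply Cmod_pos_Im, Hz |].
  destruct (sine_point_angles A (arg_up z - INR (S k) * A)) as (Hi & Ht & Ht1); try nra.
  exists (sine_point A (arg_up z - INR (S k) * A)). split; [split; [exact Hi|]|].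
  - unfold total_arg. rewrite Ht, Ht1, HSK. nra.
  - rewrite fd_sine_point by (apply Rgt_not_eq, sin_gt_0; nra).
    unfold level_modulus in Hv. rewrite Hv.
    replace (INR (S k) * A + (arg_up z - INR (S k) * A)) with (arg_up z) by ring.
    symmetry; apply polar_arg_up, Hz.
Qed.

Lemma Omega_plus_Im_fd_pos w : Omega_plus w -> 0 < Im (fd (S k) w) <-> 0 < Im w.
Proof.
  intros [[Hy Hx]|[Hw|Hw]].
  - rewrite (RtoC_Re w Hy), fd_real, !im_RtoC. lra.
  - pose proof (fd_upper_part_Im w Hw). destruct Hw. tauto.
  - pose proof (fd_upper_part_Im _ Hw). destruct Hw as [Hy _].
    rewrite fd_conj, im_conj in *. lra.
Qed.

Lemma Omega_plus_Im_fd_neg w : Omega_plus w -> Im (fd (S k) w) < 0 <-> Im w < 0.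
Proof.
  intro Hw. apply Omega_plus_conj in Hw. apply Omega_plus_Im_fd_pos in Hw.
  rewrite fd_conj, !im_conj in Hw. lra.
Qed.

Lemma Omega_plus_upper w : Omega_plus w -> 0 < Im w -> upper_part w.
Proof. intros [[Hy _]|[Hw|[Hy _]]] H; [lra | exact Hw | rewrite im_conj in Hy; lra]. Qed.

Lemma Omega_plus_lower w : Omega_plus w -> Im w < 0 -> upper_part (Cconj w).
Proof.
  intros Hw Hy. apply Omega_plus_upper; [apply Omega_plus_conj, Hw | rewrite im_conj; lra].
Qed.

Lemma fd_Omega_plus_not_cut w : Omega_plus w -> ~ cut_ray (S k) (fd (S k) w).
Proof.
  intros Hw Hcut. apply cut_ray_iff in Hcut. destruct Hcut as [Hc1 Hc2].
  destruct Hw as [[Hy Hx]|[Hw|Hw]].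
  - rewrite (RtoC_Re w Hy), fd_real, re_RtoC in Hc2. pose proof (fdR_gt _ Hx). lra.
  - pose proof (fd_upper_part_Im w Hw). lra.
  - pose proof (fd_upper_part_Im _ Hw). rewrite fd_conj, im_conj in *. lra.
Qed.

Lemma fd_Omega_plus_inj w1 w2 : Omega_plus w1 -> Omega_plus w2 ->
  fd (S k) w1 = fd (S k) w2 -> w1 = w2.
Proof.
  intros H1 H2 E.
  assert (Hpos : 0 < Im w1 <-> 0 < Im w2).
  { rewrite <- (Omega_plus_Im_fd_pos w1 H1), <- (Omega_plus_Im_fd_pos w2 H2), E. tauto. }
  assert (Hneg : Im w1 < 0 <-> Im w2 < 0).
  { rewrite <- (Omega_plus_Im_fd_neg w1 H1), <- (Omega_plus_Im_fd_neg w2 H2), E. tauto. }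
  destruct (Rtotal_order (Im w1) 0) as [N1|[Z1|P1]].
  - rewrite <- (Cconj_conj w1), <- (Cconj_conj w2). f_equal.
    apply fd_upper_part_inj; [apply Omega_plus_lower; tauto..|].
    rewrite !fd_conj, E. reflexivity.
  - assert (Z2 : Im w2 = 0).
    { destruct (Rtotal_order (Im w2) 0) as [N2|[Z2|P2]];
        [apply Hneg in N2 | exact Z2 | apply Hpos in P2]; lra. }
    pose proof (Omega_plus_Re w1 H1) as R1. pose proof (Omega_plus_Re w2 H2) as R2.
    rewrite (RtoC_Re w1 Z1), (RtoC_Re w2 Z2) in E |- *. rewrite !fd_real in E.
    injection E as E. f_equal.
    destruct (Rtotal_order (Re w1) (Re w2)) as [L|[L|L]]; [exfalso | exact L | exfalso].
    + pose proof (fdR_increasing _ _ R1 L). lra.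
    + pose proof (fdR_increasing _ _ R2 L). lra.
  - apply fd_upper_part_inj; [apply Omega_plus_upper; tauto..|exact E].
Qed.

Lemma fd_Omega_plus_surj z : ~ cut_ray (S k) z -> exists w, Omega_plus w /\ fd (S k) w = z.
Proof.
  intros Hz. destruct (Rtotal_order (Im z) 0) as [Hn|[H0|Hp]].
  - destruct (fd_upper_part_surj (Cconj z)) as [w [Hw Ew]]; [rewrite im_conj; lra|].
    exists (Cconj w). split; [right; right; rewrite Cconj_conj; exact Hw|].
    rewrite fd_conj, Ew. apply Cconj_conj.
  - assert (Hr : - crit_modulus < Re z).
    { apply Rnot_le_lt. intro Hle. apply Hz, cut_ray_iff. tauto. }
    destruct (fdR_surj (Re z) Hr) as [x [Hx Hxv]].
    exists (RtoC x). split; [left; split; [apply im_RtoC | rewrite re_RtoC; exact Hx]|].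
    rewrite fd_real, Hxv. symmetry. apply RtoC_Re, H0.
  - destruct (fd_upper_part_surj z Hp) as [w [Hw Ew]]. exists w. split; [right; left|]; assumption.
Qed.

Lemma fd_Omega_plus_bij : bij_onto (fd (S k)) Omega_plus (fun z => ~ cut_ray (S k) z).
Proof.
  split; [exact fd_Omega_plus_not_cut | split; [exact fd_Omega_plus_inj | exact fd_Omega_plus_surj]].
Qed.

Lemma fd_gamma_up_bij : bij_onto (fd (S k)) (image_from0 gamma_up) (cut_ray (S k)).
Proof.
  split; [|split].
  - intros w [t [Ht ->]]. apply cut_ray_iff. rewrite fd_gamma_up, re_RtoC, im_RtoC.
    destruct (gamma_angle_range t) as [HA HDA].
    pose proof (gamma_modulus_ge_crit _ HA HDA). split; [reflexivity | lra].
  - intros w1 w2 [s [Hs ->]] [t [Ht ->]] E. f_equal. apply fd_gamma_up_inj; assumption.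
  - intros z Hz. apply cut_ray_iff in Hz. destruct Hz as [Hz1 Hz2].
    destruct (gamma_modulus_surj (- Re z)) as [A (HA & HDA & Hv)]; [lra|].
    destruct (gamma_angle_surj A HA HDA) as [t [Ht Et]].
    exists (gamma_up t). split; [exists t; split; [exact Ht | reflexivity]|].
    rewrite fd_gamma_up, Et, Hv, Ropp_involutive. symmetry. apply RtoC_Re, Hz1.
Qed.

Lemma closure_total_arg_le z : 0 < Im z -> closure_C Omega_plus z -> total_arg z <= PI.
Proof.
  intros Hy Hcl. apply Rnot_lt_le. intro Hlt.
  apply (closure_open_disjoint Omega_plus (fun u => 0 < Im u /\ 0 < total_arg u - PI) z Hcl).
  - apply open_and_pos; [apply open_pos, continuous_Im|].
    intros u Hu. apply (continuous_minus total_arg (fun _ => PI));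
      [apply continuous_total_arg; lra | apply continuous_const].
  - split; lra.
  - intros u [Hu Hs] Hw. destruct (Omega_plus_upper u Hw Hu). lra.
Qed.

Lemma closure_Re_ge z : closure_C Omega_plus z -> - / INR (S k) <= Re z.
Proof.
  intros Hcl. apply Rnot_lt_le. intro Hlt.
  apply (closure_open_disjoint Omega_plus (fun u => 0 < - / INR (S k) - Re u) z Hcl).
  - apply open_pos. intro u.
    apply (continuous_minus (fun _ => - / INR (S k)) (fun u : C => Re u));
      [apply continuous_const | apply continuous_Re].
  - lra.
  - intros u Hu Hw. pose proof (Omega_plus_Re u Hw). lra.
Qed.

Lemma closure_Omega_plus_conj z : closure_C Omega_plus z -> closure_C Omega_plus (Cconj z).
Proof.
  intros Hcl eps. destruct (Hcl eps) as [w [Hw Hb]]. exists (Cconj w).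
  split; [apply Omega_plus_conj, Hw|].
  apply ball_C in Hb. apply ball_C. rewrite !re_conj, !im_conj.
  replace (- Im w - - Im z) with (- (Im w - Im z)) by ring. rewrite Rabs_Ropp. exact Hb.
Qed.

Lemma boundary_upper z : 0 < Im z -> closure_C Omega_plus z -> ~ Omega_plus z ->
  image_from0 gamma_up z.
Proof.
  intros Hy Hcl Hn.
  assert (Hs : total_arg z = PI).
  { apply Rle_antisym; [apply closure_total_arg_le; assumption|].
    apply Rnot_lt_le. intro Hlt. apply Hn. right; left. split; assumption. }
  destruct (gamma_up_of_level z Hy Hs) as [t [Ht ->]]. exists t. split; [lra | reflexivity].
Qed.

Lemma boundary_Omega_plus z : boundary_C Omega_plus z <-> Gamma_perp z.
Proof.
  split.
  - intros [Hcl Hni].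
    assert (Hn : ~ Omega_plus z) by (intro Hz; apply Hni, open_Omega_plus, Hz).
    destruct (Rtotal_order (Im z) 0) as [Hneg|[H0|Hp]].
    + right. exists (Cconj z). split; [|symmetry; apply Cconj_conj].
      apply boundary_upper; [rewrite im_conj; lra | apply closure_Omega_plus_conj, Hcl |].
      rewrite Omega_plus_conj. exact Hn.
    + left. exists 0. split; [lra|]. rewrite gamma_up_0, (RtoC_Re z H0). f_equal.
      apply Rle_antisym; [|apply closure_Re_ge, Hcl].
      apply Rnot_lt_le. intro Hlt. apply Hn. left. split; assumption.
    + left. apply boundary_upper; assumption.
  - intro Hz. split.
    + intro eps. exists (Cplus z (RtoC (eps / 2))). pose proof (cond_pos eps).
      split; [apply Omega_plus_shift; [right; exact Hz | lra]|].
      apply ball_C. rewrite Re_shift, Im_shift, Rminus_diag, Rabs_R0.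
      replace (Re z + eps / 2 - Re z) with (eps / 2) by ring. rewrite Rabs_right; lra.
    + intros [eps H].
      apply (fd_Omega_plus_not_cut z (H z (ball_center z eps))).
      destruct Hz as [Hz|[w [Hw ->]]]; [exact (proj1 fd_gamma_up_bij z Hz)|].
      rewrite fd_conj. pose proof (proj1 fd_gamma_up_bij w Hw) as Hc.
      apply cut_ray_iff in Hc. apply cut_ray_iff. rewrite im_conj, re_conj. lra.
Qed.

End Omega_plus_construction.

Theorem lemma9p11 (d : nat) (hd : (2 <= d)%nat) :
  exists (Omega : C -> Prop) (gamma : R -> C),
    let Gup := image_from0 gamma in
    let Gdown := fun z => exists w, Gup w /\ z = Cconj w in
    let Gperp := fun z => Gup z \/ Gdown z in
    simply_connected_domain Omega /\
    (forall z, boundary_C Omega z <-> Gperp z) /\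
    (* (i) *)
    (forall x : R, - / INR d < x -> Omega (RtoC x)) /\
    (* (ii) *)
    curve_to_infinity (RtoC (- / INR d)) gamma /\
    (forall t, 0 < t -> 0 < Im (gamma t)) /\
    (* (iii) *)
    bij_onto (fd d) Omega (fun z => ~ cut_ray d z) /\
    (* (iv) *)
    bij_onto (fd d) Gup (cut_ray d) /\
    (* (v) *)
    (forall w, Omega w \/ Gperp w -> forall c : R, 0 < c -> Omega (Cplus w (RtoC c))).
Proof.
  destruct d as [|k]; [lia|]. assert (Hk : (1 <= k)%nat) by lia.
  exists (Omega_plus k), (gamma_up k). cbv zeta.
  split; [|split; [|split; [|split; [|split; [|split; [|split]]]]]].
  - pose proof (Omega_plus_star k) as Hstar.
    split; [split; [|split]|].
    + exact (open_Omega_plus k Hk).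
    + exists (RtoC 0). exact (proj1 Hstar).
    + exact (star_shaped_connected _ Hstar).
    + exact (star_shaped_simply_connected _ Hstar).
  - exact (boundary_Omega_plus k Hk).
  - intros x Hx. left. split; [apply im_RtoC | rewrite re_RtoC; exact Hx].
  - split; [|split; [|split]].
    + exact (continuous_gamma_up k Hk).
    + exact (gamma_up_0 k Hk).
    + intros s t Hs Ht E. apply (fd_gamma_up_inj k Hk); [assumption.. | now rewrite E].
    + exact (gamma_up_unbounded k Hk).
  - intros t Ht. exact (proj1 (gamma_up_level k Hk t Ht)).
  - exact (fd_Omega_plus_bij k Hk).
  - exact (fd_gamma_up_bij k Hk).
  - intros w Hw c Hc. exact (Omega_plus_shift k Hk w c Hw Hc).
Qed.
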